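(* Let $A>1$ and let $F=(F_1,\dots,F_n)$ with each $F_j\in(\mathscr{A}*\mathscr{A})^{(A)}$ a non-commutative power series in the $2n$ variables $X_1,\dots,X_n,Y_1,\dots,Y_n$, such that $F(0,\dots,0,0,\dots,0)=0$. Let $Q=\mathscr{J}_2F(0,\dots,0)\in M_{n\times n}(\mathbb{C})$ and assume that $Q$ is invertible. Then there exist $a_0\in(0,A)$ and a finite constant $C$ such that for every $a\in(0,a_0)$ and every $U\in(\mathscr{A}^{(A)})^n$ with $\|U\|_A<a$, there exists a unique $V\in(\mathscr{A}^{(A)})^n$ with $\|V\|_A<Ca$ solving $F(U,V)=0$. Moreover, there exists $f\in(\mathscr{A}^{(a)})^n$ such that $V=f(U)$.
   Context: $\mathscr{A}=\mathbb{C}\langle X_1,\dots,X_n\rangle$ is the algebra of non-commutative polynomials in $n$ variables; $\mathscr{A}*\mathscr{A}=\mathbb{C}\langle X_1,\dots,X_n,Y_1,\dots,Y_n\rangle$. Every polynomial $P$ is written $P=\sum_q\lambda_q(P)q$ over monomials $q$, and for $A>1$ one sets $\|P\|_A=\sum_q|\lambda_q(P)|A^{\deg q}$; $\mathscr{A}^{(A)}$ (resp. $(\mathscr{A}*\mathscr{A})^{(A)}$) denotes the completion for this norm (a Banach algebra of absolutely convergent non-commutative power series). For tuples $G=(G_1,\dots,G_n)$ one sets $\|G\|_A=\max_j\|G_j\|_A$. If $T_1,\dots,T_m$ are elements of a Banach algebra of norm at most $A$, any element of the completion for $\|\cdot\|_A$ in $m$ variables can be evaluated at $(T_1,\dots,T_m)$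 (continuous extension of substitution); this defines $F(U,V)$ and $f(U)$. $\mathscr{J}_2F$ is the $n\times n$ matrix $(\partial_{Y_j}F_i)_{i,j}$ of free difference quotients in the variables $Y_j$ (with $X$'s held fixed), where $\partial_{Y_j}$ is the derivation into $(\mathscr{A}*\mathscr{A})\otimes(\mathscr{A}*\mathscr{A})^{op}$ with $\partial_{Y_j}Y_i=\delta_{ij}1\otimes1$, $\partial_{Y_j}X_i=0$; evaluating both tensor factors at $0$ gives a scalar matrix $Q$. *)

From Stdlib Require Import Reals List Arith.
Import ListNotations.
Open Scope R_scope.

Record C := mkC { re : R; im : R }.
Definition C0 : C := mkC 0 0.
Definition C1 : C := mkC 1 0.
Definition Cadd (x y : C) : C := mkC (re x + re y) (im x + im y).
Definition Cmul (x y : C) : C :=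
  mkC (re x * re y - im x * im y) (re x * im y + im x * re y).
Definition Cmod (x : C) : R := sqrt (re x * re x + im x * im x).
Definition Csum (l : list C) : C := fold_right Cadd C0 l.
Definition Rsum (l : list R) : R := fold_right Rplus 0 l.
Definition Cinfinite_sum (s : nat -> C) (l : C) : Prop :=
  infinite_sum (fun d => re (s d)) (re l) /\ infinite_sum (fun d => im (s d)) (im l).

(* A monomial in m non-commuting variables Z_0,...,Z_{m-1} is a word
   (list of letters < m); its degree is its length. *)
Fixpoint words (m d : nat) : list (list nat) :=
  match d with
  | O => [ [] ]
  | S d' => flat_map (fun w => map (fun i => i :: w) (seq 0 m)) (words m d')
  end.
Definition valid_word (m : nat) (w : list nat) : Prop := Forall (fun x => (x < m)%nat) w.

(* A (formal) non-commutative series: q |-> lambda_q(P). *)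
Definition ser := list nat -> C.
Definition supported (m : nat) (P : ser) : Prop :=
  forall w, ~ valid_word m w -> P w = C0.

(* ||P||_A = sum_q |lambda_q(P)| A^{deg q}, grouped by degree:
   has_norm m A P l  <->  this (nonnegative) series converges to l. *)
Definition has_norm (m : nat) (A : R) (P : ser) (l : R) : Prop :=
  infinite_sum (fun d => A ^ d * Rsum (map (fun w => Cmod (P w)) (words m d))) l.
(* P belongs to the completion (A-variables)^{(A)} *)
Definition in_space (m : nat) (A : R) (P : ser) : Prop :=
  supported m P /\ exists l, has_norm m A P l.
Definition norm_lt (m : nat) (A : R) (P : ser) (r : R) : Prop :=
  exists l, has_norm m A P l /\ l < r.

Definition ser_one : ser := fun w => match w with [] => C1 | _ => C0 end.
Definition ser_mul (P Q : ser) : ser := fun w =>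
  Csum (map (fun k => Cmul (P (firstn k w)) (Q (skipn k w))) (seq 0 (S (length w)))).
Definition ser_prod (l : list ser) : ser := fold_right ser_mul ser_one l.

(* Evaluation G(T_0,...,T_{m-1}) of a series G in m variables at series T_k:
   coefficientwise, the degree-grouped sum  sum_d sum_{deg q = d} lambda_q(G) q(T).
   eval_is m G T R  means  G(T) = R. *)
Definition eval_term (m : nat) (G : ser) (T : nat -> ser) (w : list nat) (d : nat) : C :=
  Csum (map (fun q => Cmul (G q) (ser_prod (map T q) w)) (words m d)).
Definition eval_is (m : nat) (G : ser) (T : nat -> ser) (R : ser) : Prop :=
  forall w, Cinfinite_sum (eval_term m G T w) (R w).

(* pairing of n-tuples (U,V) into the 2n variables X_0..X_{n-1},Y_0..Y_{n-1};
   letter i < n is X_i, letter n + j is Y_j *)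
Definition pair_tuple (n : nat) (U V : nat -> ser) : nat -> ser :=
  fun k => if Nat.ltb k n then U k else V (k - n)%nat.

(* d_{Y_j} q = sum over positions k with q_k = Y_j of (q_<k) (x) (q_>k) *)
Definition fdq (n j : nat) (q : list nat) : list (list nat * list nat) :=
  flat_map (fun k => if Nat.eqb (nth k q 0%nat) (n + j) then [(firstn k q, skipn (S k) q)] else [])
           (seq 0 (length q)).
Definition ev0 (w : list nat) : C := match w with [] => C1 | _ => C0 end.
Definition dq0 (n j : nat) (q : list nat) : C :=
  Csum (map (fun p => Cmul (ev0 (fst p)) (ev0 (snd p))) (fdq n j q)).
(* Q = J_2 F(0): Q i j = sum_q lambda_q(F_i) (d_{Y_j} q)(0 (x) 0) *)
Definition jac0_is (n : nat) (F : nat -> ser) (Q : nat -> nat -> C) : Prop :=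
  forall i j, (i < n)%nat -> (j < n)%nat ->
    Cinfinite_sum (fun d => Csum (map (fun q => Cmul (F i q) (dq0 n j q)) (words (2 * n) d)))
                  (Q i j).

Definition Cmatmul (n : nat) (P Q : nat -> nat -> C) : nat -> nat -> C :=
  fun i j => Csum (map (fun k => Cmul (P i k) (Q k j)) (seq 0 n)).
Definition Cid (i j : nat) : C := if Nat.eqb i j then C1 else C0.
Definition Cinvertible (n : nat) (Q : nat -> nat -> C) : Prop :=
  exists R, forall i j, (i < n)%nat -> (j < n)%nat ->
    Cmatmul n Q R i j = Cid i j /\ Cmatmul n R Q i j = Cid i j.

From Pilot Require Import Defs.
From Stdlib Require Import Reals List Arith Lia Lra Psatz.
From Stdlib Require Import ClassicalEpsilon FunctionalExtensionality.
From Coquelicot Require Complex.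
Import ListNotations.
Import Pilot.Defs.
Open Scope R_scope.

(* Let Qi be the inverse of Q = J_2 F(0) and put H_j := Y_j - sum_k Qi_jk F_k.
   Since F(0) = 0 and J_2 F(0) = Q, the series H has neither a constant term
   nor a term linear in the Y's, and F(U,V) = 0 iff V = H(U,V).

   Because H has no
   constant and Y-linear parts, W |-> H(B, W) is a contraction of ratio 1/2
   on a ball of radius 2Ca when ||B|| <= a is small (Lipschitz and self-map
   estimates).  Picard iteration with B = (X_1,...,X_n) then yields the
   formal implicit series f of a-norm <= Ca, and the same contraction
   estimate gives uniqueness.  Next, evaluation at U with ||U||_A < a is an
   algebra homomorphism on series of finite a-norm (checked first on
   polynomials, then by truncation), so substituting U into the formal
   equation f = H(X, f) gives V = f(U) = H(U, V). *)

Definition Copp (x : C) : C := mkC (- re x) (- im x).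
Definition Csub (x y : C) : C := Cadd x (Copp y).
Definition CR (r : R) : C := mkC r 0.

Lemma C_ext (x y : C) : re x = re y -> im x = im y -> x = y.
Proof. destruct x, y; simpl; intros; subst; reflexivity. Qed.

Ltac Cring := intros; repeat match goal with x : C |- _ => destruct x end;
  apply C_ext; simpl; ring.

Lemma Cadd_assoc x y z : Cadd x (Cadd y z) = Cadd (Cadd x y) z. Proof. Cring. Qed.
Lemma Cadd_0_l x : Cadd C0 x = x. Proof. Cring. Qed.
Lemma Cadd_0_r x : Cadd x C0 = x. Proof. Cring. Qed.
Lemma Cmul_assoc x y z : Cmul x (Cmul y z) = Cmul (Cmul x y) z. Proof. Cring. Qed.
Lemma Cmul_1_l x : Cmul C1 x = x. Proof. Cring. Qed.
Lemma Cmul_1_r x : Cmul x C1 = x. Proof. Cring. Qed.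
Lemma Cmul_0_l x : Cmul C0 x = C0. Proof. Cring. Qed.
Lemma Cmul_0_r x : Cmul x C0 = C0. Proof. Cring. Qed.
Lemma Csub_diag x : Csub x x = C0. Proof. Cring. Qed.
Lemma Cadd_sub x y : Cadd (Csub x y) y = x. Proof. Cring. Qed.

Definition toC (x : C) : Complex.C := (re x, im x).

Lemma Cmod_toC x : Cmod x = Complex.Cmod (toC x).
Proof. unfold Cmod, Complex.Cmod, toC; simpl. f_equal; ring. Qed.

Lemma Cmod_ge0 x : 0 <= Cmod x.
Proof. rewrite Cmod_toC; apply Complex.Cmod_ge_0. Qed.

Lemma Cmod_tri x y : Cmod (Cadd x y) <= Cmod x + Cmod y.
Proof.
  rewrite !Cmod_toC. change (toC (Cadd x y)) with (Complex.Cplus (toC x) (toC y)).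
  apply Complex.Cmod_triangle.
Qed.

Lemma Cmod_mul x y : Cmod (Cmul x y) = Cmod x * Cmod y.
Proof.
  rewrite !Cmod_toC. change (toC (Cmul x y)) with (Complex.Cmult (toC x) (toC y)).
  apply Complex.Cmod_mult.
Qed.

Lemma Cmod_C0 : Cmod C0 = 0.
Proof. unfold Cmod; simpl. replace (0 * 0 + 0 * 0) with 0 by ring. apply sqrt_0. Qed.

Lemma Cmod_C1 : Cmod C1 = 1.
Proof. unfold Cmod; simpl. replace (1 * 1 + 0 * 0) with 1 by ring. apply sqrt_1. Qed.

Lemma Cmod_minus_one : Cmod (mkC (-1) 0) = 1.
Proof. unfold Cmod; simpl. replace (-1 * -1 + 0 * 0) with 1 by ring. apply sqrt_1. Qed.

Lemma Cmod_opp x : Cmod (Copp x) = Cmod x.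
Proof. unfold Cmod; simpl. f_equal; ring. Qed.

Lemma Cmod_eq0 x : Cmod x = 0 -> x = C0.
Proof.
  rewrite Cmod_toC; intro H. apply Complex.Cmod_eq_0 in H. unfold toC in H.
  destruct x; simpl in *. injection H; intros; subst; reflexivity.
Qed.

Lemma re_le_Cmod x : Rabs (re x) <= Cmod x.
Proof. rewrite Cmod_toC. apply (Complex.re_le_Cmod (toC x)). Qed.

Lemma im_le_Cmod x : Rabs (im x) <= Cmod x.
Proof.
  rewrite Cmod_toC. eapply Rle_trans; [|apply (Complex.Rmax_Cmod (toC x))]. apply Rmax_r.
Qed.

Lemma Cmod_le_reim x : Cmod x <= Rabs (re x) + Rabs (im x).
Proof.
  unfold Cmod. destruct x as [a b]; simpl.
  pose proof (Rabs_pos a); pose proof (Rabs_pos b).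
  apply Rsqr_incr_0_var; [|lra].
  rewrite Rsqr_sqrt by nra. unfold Rsqr.
  pose proof (Rsqr_abs a) as Ea; pose proof (Rsqr_abs b) as Eb. unfold Rsqr in Ea, Eb. nra.
Qed.

Lemma Cmod_sub_sym x y : Cmod (Csub x y) = Cmod (Csub y x).
Proof. replace (Csub x y) with (Copp (Csub y x)) by Cring. apply Cmod_opp. Qed.

Lemma Cmod_rev_tri x y : Rabs (Cmod x - Cmod y) <= Cmod (Csub x y).
Proof.
  pose proof (Cmod_tri (Csub x y) y) as H1. rewrite Cadd_sub in H1.
  pose proof (Cmod_tri (Csub y x) x) as H2. rewrite Cadd_sub, Cmod_sub_sym in H2.
  apply Rabs_le; lra.
Qed.

Lemma Cmod_small_eq x : (forall eps, eps > 0 -> Cmod x < eps) -> x = C0.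
Proof.
  intros H. apply Cmod_eq0. pose proof (Cmod_ge0 x) as Hx.
  destruct (Rle_lt_or_eq_dec _ _ Hx) as [Hlt|]; auto. specialize (H _ Hlt). lra.
Qed.

Definition rs {X} (f : X -> R) (l : list X) : R := Rsum (map f l).
Definition cs {X} (f : X -> C) (l : list X) : C := Csum (map f l).

Lemma rs_nil {X} (f : X -> R) : rs f [] = 0. Proof. reflexivity. Qed.
Lemma rs_cons {X} (f : X -> R) x l : rs f (x :: l) = f x + rs f l. Proof. reflexivity. Qed.
Lemma cs_nil {X} (f : X -> C) : cs f [] = C0. Proof. reflexivity. Qed.
Lemma cs_cons {X} (f : X -> C) x l : cs f (x :: l) = Cadd (f x) (cs f l). Proof. reflexivity. Qed.

Lemma rs_app {X} (f : X -> R) l1 l2 : rs f (l1 ++ l2) = rs f l1 + rs f l2.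
Proof. induction l1 as [|x l1 IH]; simpl; [unfold rs; simpl; ring|]. rewrite !rs_cons, IH; ring. Qed.

Lemma cs_app {X} (f : X -> C) l1 l2 : cs f (l1 ++ l2) = Cadd (cs f l1) (cs f l2).
Proof.
  induction l1 as [|x l1 IH]; simpl; [rewrite cs_nil, Cadd_0_l; reflexivity|].
  rewrite !cs_cons, IH, Cadd_assoc; reflexivity.
Qed.

Lemma cs_flat_map {X Y} (f : Y -> C) (g : X -> list Y) l :
  cs f (flat_map g l) = cs (fun x => cs f (g x)) l.
Proof. induction l; simpl; [reflexivity|]. rewrite cs_app, IHl; reflexivity. Qed.

Lemma rs_map {X Y} (f : Y -> R) (g : X -> Y) l : rs f (map g l) = rs (fun x => f (g x)) l.
Proof. unfold rs; rewrite map_map; reflexivity. Qed.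

Lemma cs_map {X Y} (f : Y -> C) (g : X -> Y) l : cs f (map g l) = cs (fun x => f (g x)) l.
Proof. unfold cs; rewrite map_map; reflexivity. Qed.

Lemma rs_ext_in {X} (f g : X -> R) l : (forall x, In x l -> f x = g x) -> rs f l = rs g l.
Proof. induction l; simpl; intros H; [reflexivity|]. rewrite !rs_cons, H, IHl; auto. Qed.

Lemma cs_ext_in {X} (f g : X -> C) l : (forall x, In x l -> f x = g x) -> cs f l = cs g l.
Proof. induction l; simpl; intros H; [reflexivity|]. rewrite !cs_cons, H, IHl; auto. Qed.

Lemma rs_ext {X} (f g : X -> R) l : (forall x, f x = g x) -> rs f l = rs g l.
Proof. intros; apply rs_ext_in; auto. Qed.

Lemma cs_ext {X} (f g : X -> C) l : (forall x, f x = g x) -> cs f l = cs g l.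
Proof. intros; apply cs_ext_in; auto. Qed.

Lemma rs_le_in {X} (f g : X -> R) l : (forall x, In x l -> f x <= g x) -> rs f l <= rs g l.
Proof.
  induction l as [|x l IH]; intros H; rewrite ?rs_nil, ?rs_cons; [lra|].
  pose proof (H x (or_introl eq_refl)). assert (rs f l <= rs g l) by (apply IH; intros; apply H; simpl; auto). lra.
Qed.

Lemma rs_le {X} (f g : X -> R) l : (forall x, f x <= g x) -> rs f l <= rs g l.
Proof. intros; apply rs_le_in; auto. Qed.

Lemma rs_zero {X} (f : X -> R) l : (forall x, In x l -> f x = 0) -> rs f l = 0.
Proof. induction l; simpl; intros H; [reflexivity|]. rewrite rs_cons, H, IHl; auto; ring. Qed.

Lemma cs_zero {X} (f : X -> C) l : (forall x, In x l -> f x = C0) -> cs f l = C0.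
Proof. induction l; simpl; intros H; [reflexivity|]. rewrite cs_cons, H, IHl; auto. apply Cadd_0_l. Qed.

Lemma rs_nonneg {X} (f : X -> R) l : (forall x, In x l -> 0 <= f x) -> 0 <= rs f l.
Proof.
  intros H. replace 0 with (rs (fun _ : X => 0) l) by (apply rs_zero; auto). apply rs_le_in; auto.
Qed.

Lemma rs_plus {X} (f g : X -> R) l : rs (fun x => f x + g x) l = rs f l + rs g l.
Proof. induction l; [unfold rs; simpl; ring|]. rewrite !rs_cons, IHl; ring. Qed.

Lemma cs_plus {X} (f g : X -> C) l : cs (fun x => Cadd (f x) (g x)) l = Cadd (cs f l) (cs g l).
Proof. induction l; [rewrite !cs_nil, Cadd_0_l; reflexivity|]. rewrite !cs_cons, IHl; Cring. Qed.

Lemma rs_scal {X} c (f : X -> R) l : rs (fun x => c * f x) l = c * rs f l.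
Proof. induction l; [unfold rs; simpl; ring|]. rewrite !rs_cons, IHl; ring. Qed.

Lemma cs_scal_l {X} c (f : X -> C) l : cs (fun x => Cmul c (f x)) l = Cmul c (cs f l).
Proof. induction l; [rewrite !cs_nil, Cmul_0_r; reflexivity|]. rewrite !cs_cons, IHl; Cring. Qed.

Lemma cs_scal_r {X} c (f : X -> C) l : cs (fun x => Cmul (f x) c) l = Cmul (cs f l) c.
Proof. induction l; [rewrite !cs_nil, Cmul_0_l; reflexivity|]. rewrite !cs_cons, IHl; Cring. Qed.

Lemma cs_sub {X} (f g : X -> C) l : cs (fun x => Csub (f x) (g x)) l = Csub (cs f l) (cs g l).
Proof. induction l; [apply C_ext; simpl; ring|]. rewrite !cs_cons, IHl; Cring. Qed.

Lemma cs_swap {X Y} (f : X -> Y -> C) l1 l2 :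
  cs (fun x => cs (fun y => f x y) l2) l1 = cs (fun y => cs (fun x => f x y) l1) l2.
Proof.
  induction l1; [rewrite cs_nil; symmetry; apply cs_zero; auto|].
  rewrite cs_cons, IHl1, <- cs_plus. reflexivity.
Qed.

Lemma Cmod_cs {X} (f : X -> C) l : Cmod (cs f l) <= rs (fun x => Cmod (f x)) l.
Proof.
  induction l; [rewrite cs_nil, rs_nil, Cmod_C0; lra|].
  rewrite cs_cons, rs_cons. eapply Rle_trans; [apply Cmod_tri|]. lra.
Qed.

Lemma re_cs {X} (f : X -> C) l : re (cs f l) = rs (fun x => re (f x)) l.
Proof. induction l; [reflexivity|]. rewrite cs_cons, rs_cons; simpl; rewrite IHl; ring. Qed.

Lemma im_cs {X} (f : X -> C) l : im (cs f l) = rs (fun x => im (f x)) l.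
Proof. induction l; [reflexivity|]. rewrite cs_cons, rs_cons; simpl; rewrite IHl; ring. Qed.

(* Real sums are real parts of complex sums, so identities proved for cs transfer to rs. *)
Lemma rs_as_re_cs {X} (f : X -> R) l : rs f l = re (cs (fun x => CR (f x)) l).
Proof. rewrite re_cs. reflexivity. Qed.

Lemma rs_seq_S (f : nat -> R) N : rs f (seq 0 (S N)) = rs f (seq 0 N) + f N.
Proof. rewrite seq_S, rs_app. unfold rs; simpl. ring. Qed.

Lemma cs_seq_S (f : nat -> C) N : cs f (seq 0 (S N)) = Cadd (cs f (seq 0 N)) (f N).
Proof. rewrite seq_S, cs_app. unfold cs; simpl. rewrite Cadd_0_r. reflexivity. Qed.

Lemma rs_seq_shift (f : nat -> R) a k : rs f (seq (S a) k) = rs (fun d => f (S d)) (seq a k).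
Proof. rewrite <- seq_shift, rs_map. reflexivity. Qed.

Lemma cs_seq_shift (f : nat -> C) N :
  cs f (seq 0 (S N)) = Cadd (f 0%nat) (cs (fun k => f (S k)) (seq 0 N)).
Proof. simpl. rewrite cs_cons, <- seq_shift, cs_map. reflexivity. Qed.

Lemma sum_f_R0_rs f N : sum_f_R0 f N = rs f (seq 0 (S N)).
Proof.
  induction N; [unfold rs; simpl; ring|].
  cbn [sum_f_R0]. rewrite IHN, (rs_seq_S f (S N)). reflexivity.
Qed.

(* Exchanging the order of a triangular double sum (Cauchy products). *)
Lemma cs_reindex (g : nat -> nat -> C) N :
  cs (fun d => cs (fun i => g i (d - i)%nat) (seq 0 (S d))) (seq 0 (S N)) =
  cs (fun i => cs (fun j => g i j) (seq 0 (S (N - i)))) (seq 0 (S N)).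
Proof.
  induction N as [|N IH]; [reflexivity|].
  rewrite (cs_seq_S _ (S N)), IH.
  rewrite (cs_seq_S (fun i => cs (fun j => g i j) (seq 0 (S (S N - i)))) (S N)).
  rewrite (cs_seq_S (fun i => g i (S N - i)%nat) (S N)).
  replace (S N - S N)%nat with 0%nat by lia.
  assert (E : cs (fun i => cs (fun j => g i j) (seq 0 (S (S N - i)))) (seq 0 (S N)) =
              Cadd (cs (fun i => cs (fun j => g i j) (seq 0 (S (N - i)))) (seq 0 (S N)))
                   (cs (fun i => g i (S N - i)%nat) (seq 0 (S N)))).
  { rewrite <- cs_plus. apply cs_ext_in. intros i Hi. apply in_seq in Hi.
    replace (S (S N - i)) with (S (S (N - i))) by lia.
    rewrite (cs_seq_S _ (S (N - i))). do 2 f_equal. lia. }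
  rewrite E, Cadd_assoc. f_equal. unfold cs; simpl. rewrite Cadd_0_r. reflexivity.
Qed.

Lemma rs_reindex (g : nat -> nat -> R) N :
  rs (fun d => rs (fun i => g i (d - i)%nat) (seq 0 (S d))) (seq 0 (S N)) =
  rs (fun i => rs (fun j => g i j) (seq 0 (S (N - i)))) (seq 0 (S N)).
Proof.
  pose proof (f_equal re (cs_reindex (fun i j => CR (g i j)) N)) as E. rewrite !re_cs in E.
  etransitivity; [|etransitivity; [exact E|]]; apply rs_ext; intro; rewrite re_cs; reflexivity.
Qed.

Lemma cs_single (f : nat -> C) i n : (i < n)%nat -> (forall x, x <> i -> f x = C0) ->
  cs f (seq 0 n) = f i.
Proof.
  intros Hi H. replace n with (i + S (n - S i))%nat at 1 by lia. rewrite seq_app. simpl.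
  rewrite cs_app, cs_cons, (cs_zero _ (seq 0 i)), (cs_zero _ (seq (S i) _)), Cadd_0_l, Cadd_0_r;
    [reflexivity| |]; intros x Hx; apply in_seq in Hx; apply H; lia.
Qed.

Lemma cs_trim (g : nat -> C) K N : (K <= N)%nat -> (forall i, (K < i)%nat -> g i = C0) ->
  cs g (seq 0 (S N)) = cs g (seq 0 (S K)).
Proof.
  intros HKN H. replace (S N) with (S K + (N - K))%nat by lia. rewrite seq_app, cs_app.
  rewrite (cs_zero _ (seq (0 + S K) (N - K))); [apply Cadd_0_r|].
  intros i Hi. apply in_seq in Hi. apply H. lia.
Qed.

Definition cvC (u : nat -> C) (l : C) : Prop :=
  forall eps, eps > 0 -> exists N, forall k, (k >= N)%nat -> Cmod (Csub (u k) l) < eps.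

Lemma cvC_unique u l1 l2 : cvC u l1 -> cvC u l2 -> l1 = l2.
Proof.
  intros H1 H2. assert (E : Csub l1 l2 = C0).
  { apply Cmod_small_eq. intros eps He.
    destruct (H1 (eps / 2)) as [N1 HN1]; [lra|]. destruct (H2 (eps / 2)) as [N2 HN2]; [lra|].
    specialize (HN1 (N1 + N2)%nat ltac:(lia)). specialize (HN2 (N1 + N2)%nat ltac:(lia)).
    replace (Csub l1 l2) with
      (Cadd (Csub (u (N1 + N2)%nat) l2) (Copp (Csub (u (N1 + N2)%nat) l1))) by Cring.
    eapply Rle_lt_trans; [apply Cmod_tri|]. rewrite Cmod_opp. lra. }
  replace l1 with (Cadd (Csub l1 l2) l2) by Cring. rewrite E. apply Cadd_0_l.
Qed.

Lemma cvC_plus u v l m : cvC u l -> cvC v m -> cvC (fun k => Cadd (u k) (v k)) (Cadd l m).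
Proof.
  intros H1 H2 eps He.
  destruct (H1 (eps / 2)) as [N1 HN1]; [lra|]. destruct (H2 (eps / 2)) as [N2 HN2]; [lra|].
  exists (N1 + N2)%nat. intros k Hk.
  replace (Csub (Cadd (u k) (v k)) (Cadd l m)) with (Cadd (Csub (u k) l) (Csub (v k) m)) by Cring.
  eapply Rle_lt_trans; [apply Cmod_tri|].
  specialize (HN1 k ltac:(lia)). specialize (HN2 k ltac:(lia)). lra.
Qed.

Lemma cvC_scal c u l : cvC u l -> cvC (fun k => Cmul c (u k)) (Cmul c l).
Proof.
  intros H eps He. pose proof (Cmod_ge0 c) as Hc.
  destruct (H (eps / (Cmod c + 1))) as [N HN]; [apply Rdiv_lt_0_compat; lra|].
  exists N. intros k Hk. specialize (HN k Hk).
  replace (Csub (Cmul c (u k)) (Cmul c l)) with (Cmul c (Csub (u k) l)) by Cring.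
  rewrite Cmod_mul. pose proof (Cmod_ge0 (Csub (u k) l)).
  apply Rmult_lt_compat_l with (r := Cmod c + 1) in HN; [|lra].
  replace ((Cmod c + 1) * (eps / (Cmod c + 1))) with eps in HN by (field; lra). nra.
Qed.

Lemma cvC_sub u v l m : cvC u l -> cvC v m -> cvC (fun k => Csub (u k) (v k)) (Csub l m).
Proof.
  intros Hu Hv. apply cvC_plus; auto.
  intros eps He. destruct (Hv eps He) as [N HN]. exists N. intros k Hk.
  replace (Csub (Copp (v k)) (Copp m)) with (Copp (Csub (v k) m)) by Cring.
  rewrite Cmod_opp; auto.
Qed.

Lemma cvC_ext u v l : (forall k, u k = v k) -> cvC u l -> cvC v l.
Proof. intros E H eps He. destruct (H eps He) as [N HN]. exists N; intros; rewrite <- E; auto. Qed.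

Lemma cvC_eventually_ext u v l N0 : (forall k, (k >= N0)%nat -> u k = v k) -> cvC u l -> cvC v l.
Proof.
  intros E H eps He. destruct (H eps He) as [N HN]. exists (N + N0)%nat.
  intros k Hk. rewrite <- E by lia. apply HN. lia.
Qed.

Lemma cvC_const u l N0 : (forall k, (k >= N0)%nat -> u k = l) -> cvC u l.
Proof. intros H eps He. exists N0. intros k Hk. rewrite H, Csub_diag, Cmod_C0; auto; lra. Qed.

Lemma cvC_shift u l D : cvC u l -> cvC (fun k => u (D + k)%nat) l.
Proof. intros H eps He. destruct (H eps He) as [N HN]. exists N. intros k Hk. apply HN. lia. Qed.

Lemma cvC_cs {X} (f : nat -> X -> C) (g : X -> C) l :
  (forall x, In x l -> cvC (fun k => f k x) (g x)) -> cvC (fun k => cs (f k) l) (cs g l).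
Proof.
  induction l as [|x l IH]; intros H; [apply cvC_const with 0%nat; reflexivity|].
  rewrite cs_cons. apply (cvC_ext (fun k => Cadd (f k x) (cs (f k) l))); [reflexivity|].
  apply cvC_plus; [apply H; simpl; auto|]. apply IH. intros; apply H; simpl; auto.
Qed.

Lemma cvC_cauchy u :
  (forall eps, eps > 0 -> exists N, forall k k', (k >= N)%nat -> (k' >= N)%nat ->
     Cmod (Csub (u k) (u k')) < eps) ->
  exists l, cvC u l.
Proof.
  intros H.
  assert (Hr : Cauchy_crit (fun k => re (u k))).
  { intros eps He. destruct (H eps He) as [N HN]. exists N. intros k k' Hk Hk'.
    unfold R_dist. eapply Rle_lt_trans; [|apply (HN k k' Hk Hk')].
    eapply Rle_trans; [|apply re_le_Cmod]. simpl. right; f_equal; ring. }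
  assert (Hi : Cauchy_crit (fun k => im (u k))).
  { intros eps He. destruct (H eps He) as [N HN]. exists N. intros k k' Hk Hk'.
    unfold R_dist. eapply Rle_lt_trans; [|apply (HN k k' Hk Hk')].
    eapply Rle_trans; [|apply im_le_Cmod]. simpl. right; f_equal; ring. }
  destruct (R_complete _ Hr) as [lr Hlr]. destruct (R_complete _ Hi) as [li Hli].
  exists (mkC lr li). intros eps He.
  destruct (Hlr (eps / 2)) as [N1 HN1]; [lra|]. destruct (Hli (eps / 2)) as [N2 HN2]; [lra|].
  exists (N1 + N2)%nat. intros k Hk. eapply Rle_lt_trans; [apply Cmod_le_reim|].
  specialize (HN1 k ltac:(lia)). specialize (HN2 k ltac:(lia)). unfold R_dist, Rminus in *. simpl. lra.
Qed.

Definition limC (u : nat -> C) : C :=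
  match excluded_middle_informative (exists l, cvC u l) with
  | left H => proj1_sig (constructive_indefinite_description _ H)
  | right _ => C0
  end.

Lemma limC_spec u : (exists l, cvC u l) -> cvC u (limC u).
Proof.
  intros H. unfold limC. destruct (excluded_middle_informative _); [|contradiction].
  destruct (constructive_indefinite_description _ e). auto.
Qed.

Lemma Un_cv_le u l B : Un_cv u l -> (forall k, u k <= B) -> l <= B.
Proof.
  intros H Hb. destruct (Rle_or_lt l B); auto.
  destruct (H (l - B)) as [N HN]; [lra|]. specialize (HN N (le_n _)). specialize (Hb N).
  unfold R_dist in HN. apply Rabs_def2 in HN. lra.
Qed.

Lemma Un_cv_Cmod u l : cvC u l -> Un_cv (fun k => Cmod (u k)) (Cmod l).
Proof.
  intros H eps He. destruct (H eps He) as [N HN]. exists N. intros k Hk. unfold R_dist.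
  eapply Rle_lt_trans; [apply Cmod_rev_tri|]. auto.
Qed.

Lemma Un_cv_rs {X} (f : nat -> X -> R) (g : X -> R) l :
  (forall x, In x l -> Un_cv (fun k => f k x) (g x)) -> Un_cv (fun k => rs (f k) l) (rs g l).
Proof.
  induction l as [|x l IH]; intros H.
  - intros eps He. exists 0%nat. intros. unfold R_dist, rs; simpl. rewrite Rminus_0_r, Rabs_R0. lra.
  - rewrite rs_cons. apply (Un_cv_ext (fun k => f k x + rs (f k) l)); [intros; rewrite rs_cons; reflexivity|].
    apply CV_plus; [apply H; simpl; auto|]. apply IH. intros; apply H; simpl; auto.
Qed.

Lemma Un_cv_scal c u l : Un_cv u l -> Un_cv (fun k => c * u k) (c * l).
Proof.
  intros. apply CV_mult; auto.
  intros eps He; exists 0%nat; intros; unfold R_dist; rewrite Rminus_diag, Rabs_R0; lra.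
Qed.

Lemma Cinfinite_sum_cvC s l : Cinfinite_sum s l <-> cvC (fun N => cs s (seq 0 (S N))) l.
Proof.
  unfold Cinfinite_sum, infinite_sum. split.
  - intros [Hr Hi] eps He.
    destruct (Hr (eps / 2)) as [N1 HN1]; [lra|]. destruct (Hi (eps / 2)) as [N2 HN2]; [lra|].
    exists (N1 + N2)%nat. intros k Hk. eapply Rle_lt_trans; [apply Cmod_le_reim|].
    specialize (HN1 k ltac:(lia)). specialize (HN2 k ltac:(lia)). unfold R_dist in *.
    unfold Csub; cbn [re im Cadd Copp]. rewrite re_cs, im_cs, <- !sum_f_R0_rs. unfold Rminus in *. lra.
  - intros H. split; intros eps He; destruct (H eps He) as [N HN]; exists N; intros k Hk;
      specialize (HN k Hk); unfold R_dist; rewrite sum_f_R0_rs; eapply Rle_lt_trans; try apply HN.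
    + eapply Rle_trans; [|apply re_le_Cmod]. unfold Csub; cbn [re Cadd Copp].
      rewrite re_cs. right; f_equal; ring.
    + eapply Rle_trans; [|apply im_le_Cmod]. unfold Csub; cbn [im Cadd Copp].
      rewrite im_cs. right; f_equal; ring.
Qed.

Lemma infsum_bounded (f : nat -> R) B : (forall d, 0 <= f d) ->
  (forall N, rs f (seq 0 (S N)) <= B) -> exists l, infinite_sum f l /\ l <= B.
Proof.
  intros Hpos HB.
  assert (Hg : Un_growing (fun N => sum_f_R0 f N)) by (intros N; simpl; specialize (Hpos (S N)); lra).
  assert (Hbd : bound (EUn (fun N => sum_f_R0 f N))).
  { exists B. intros x [N ->]. rewrite sum_f_R0_rs. auto. }
  destruct (growing_cv _ Hg Hbd) as [l Hl]. exists l. split; [exact Hl|].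
  apply Un_cv_le with (fun N => sum_f_R0 f N); auto. intros; rewrite sum_f_R0_rs; auto.
Qed.

Lemma infsum_partial_le (f : nat -> R) l N : (forall d, 0 <= f d) -> infinite_sum f l ->
  rs f (seq 0 (S N)) <= l.
Proof.
  intros Hpos Hl. destruct (Rle_or_lt (rs f (seq 0 (S N))) l); auto.
  destruct (Hl (rs f (seq 0 (S N)) - l)) as [M HM]; [lra|].
  specialize (HM (M + N)%nat ltac:(lia)). unfold R_dist in HM. apply Rabs_def2 in HM.
  assert (rs f (seq 0 (S N)) <= sum_f_R0 f (M + N)).
  { rewrite sum_f_R0_rs. replace (S (M + N)) with (S N + M)%nat by lia. rewrite seq_app, rs_app.
    assert (0 <= rs f (seq (0 + S N) M)) by (apply rs_nonneg; auto). lra. }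
  lra.
Qed.

Lemma geom_tail rho a k : 0 <= rho < 1 -> rs (fun d => rho ^ d) (seq a k) <= rho ^ a / (1 - rho).
Proof.
  intros Hr. revert a; induction k as [|k IH]; intros a.
  - simpl seq. rewrite rs_nil. apply Rmult_le_pos; [apply pow_le; lra|]. left; apply Rinv_0_lt_compat; lra.
  - simpl seq. rewrite rs_cons. specialize (IH (S a)). simpl pow in IH.
    apply Rle_trans with (rho ^ a + rho * rho ^ a / (1 - rho)); [lra|]. right. field. lra.
Qed.

Lemma geom_small c q eps : 0 <= c -> 0 <= q < 1 -> eps > 0 ->
  exists N, forall k, (k >= N)%nat -> c * q ^ k < eps.
Proof.
  intros Hc Hq He.
  destruct (pow_lt_1_zero q ltac:(rewrite Rabs_pos_eq; lra) (eps / (c + 1))) as [N HN];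
    [apply Rdiv_lt_0_compat; lra|].
  exists N. intros k Hk. specialize (HN k Hk). rewrite Rabs_pos_eq in HN by (apply pow_le; lra).
  apply Rle_lt_trans with (c * (eps / (c + 1))); [apply Rmult_le_compat_l; lra|].
  apply Rmult_lt_reg_r with (c + 1); [lra|].
  replace (c * (eps / (c + 1)) * (c + 1)) with (c * eps) by (field; lra). nra.
Qed.

Lemma cvC_geom u l c q : 0 <= c -> 0 <= q < 1 -> (forall D, Cmod (Csub (u D) l) <= c * q ^ D) ->
  cvC u l.
Proof.
  intros Hc Hq H eps He. destruct (geom_small c q eps Hc Hq He) as [N HN].
  exists N. intros k Hk. eapply Rle_lt_trans; [apply H|]. auto.
Qed.

Lemma words_0 m : words m 0 = [[]]. Proof. reflexivity. Qed.

Lemma words_1 m : words m 1 = map (fun i => [i]) (seq 0 m).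
Proof. simpl. rewrite app_nil_r. reflexivity. Qed.

Lemma cs_words_S m d (f : list nat -> C) :
  cs f (words m (S d)) = cs (fun w => cs (fun i => f (i :: w)) (seq 0 m)) (words m d).
Proof. simpl. rewrite cs_flat_map. apply cs_ext; intro w. rewrite cs_map. reflexivity. Qed.

Lemma In_words m d w : In w (words m d) <-> length w = d /\ valid_word m w.
Proof.
  revert w; induction d as [|d IH]; intros w; simpl.
  - split; [intros [<-|[]]; split; auto; constructor|].
    intros [H _]. destruct w; simpl in H; try lia. auto.
  - rewrite in_flat_map. split.
    + intros [w' [Hw' Hin]]. apply in_map_iff in Hin. destruct Hin as [i [<- Hi]].
      apply in_seq in Hi. apply IH in Hw'. destruct Hw'. simpl. split; [lia|]. constructor; auto; lia.
    + intros [Hl Hv]. destruct w as [|i w']; simpl in Hl; try lia. inversion Hv; subst.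
      exists w'. split; [apply IH; auto|]. apply in_map_iff. exists i. split; auto. apply in_seq; lia.
Qed.

Lemma valid_word_dec m w : {valid_word m w} + {~ valid_word m w}.
Proof. apply Forall_dec. intro x; apply lt_dec. Qed.

(* Summing over all cuts of all words of length d = summing over pairs of words of
   complementary lengths: the combinatorics of the Cauchy product. *)
Lemma cs_split m d (psi : list nat -> list nat -> C) :
  cs (fun w => cs (fun k => psi (firstn k w) (skipn k w)) (seq 0 (S (length w)))) (words m d)
  = cs (fun i => cs (fun u => cs (fun v => psi u v) (words m (d - i))) (words m i)) (seq 0 (S d)).
Proof.
  revert psi. induction d as [|d IH]; intros psi; [unfold cs; simpl; rewrite !Cadd_0_r; reflexivity|].
  rewrite cs_words_S, (cs_seq_shift _ (S d)), words_0. replace (S d - 0)%nat with (S d) by lia.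
  transitivity (Cadd (cs (fun w' => cs (fun i => psi [] (i :: w')) (seq 0 m)) (words m d))
    (cs (fun w' => cs (fun k => cs (fun i => psi (i :: firstn k w') (skipn k w')) (seq 0 m))
                      (seq 0 (S (length w')))) (words m d))).
  { rewrite <- cs_plus. apply cs_ext; intro w'. rewrite <- cs_swap, <- cs_plus.
    apply cs_ext; intro i. simpl length. rewrite cs_seq_shift. reflexivity. }
  f_equal; [rewrite cs_cons, cs_nil, Cadd_0_r, cs_words_S; reflexivity|].
  rewrite (IH (fun u v => cs (fun i => psi (i :: u) v) (seq 0 m))).
  apply cs_ext_in. intros i Hi. apply in_seq in Hi.
  replace (S d - S i)%nat with (d - i)%nat by lia.
  rewrite cs_words_S. apply cs_ext; intro u. symmetry. apply cs_swap.
Qed.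

Lemma rs_split m d (psi : list nat -> list nat -> R) :
  rs (fun w => rs (fun k => psi (firstn k w) (skipn k w)) (seq 0 (S (length w)))) (words m d)
  = rs (fun i => rs (fun u => rs (fun v => psi u v) (words m (d - i))) (words m i)) (seq 0 (S d)).
Proof.
  pose proof (f_equal re (cs_split m d (fun u v => CR (psi u v)))) as E. rewrite !re_cs in E.
  etransitivity; [|etransitivity; [exact E|]]; apply rs_ext; intro.
  - rewrite re_cs. reflexivity.
  - rewrite re_cs. apply rs_ext; intro. rewrite re_cs. reflexivity.
Qed.

(* ** The algebra of formal series *)

Definition sadd (P Q : ser) : ser := fun w => Cadd (P w) (Q w).
Definition ssub (P Q : ser) : ser := fun w => Csub (P w) (Q w).
Definition sscal (c : C) (P : ser) : ser := fun w => Cmul c (P w).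
Definition szero : ser := fun _ => C0.
Definition csum {X} (f : X -> ser) (l : list X) : ser := fun w => cs (fun x => f x w) l.
Definition mono (q : list nat) (T : nat -> ser) : ser := ser_prod (map T q).
Definition svar (i : nat) : ser := fun w => if list_eq_dec Nat.eq_dec w [i] then C1 else C0.

Lemma mono_nil T : mono [] T = ser_one. Proof. reflexivity. Qed.
Lemma mono_cons x q T : mono (x :: q) T = ser_mul (T x) (mono q T). Proof. reflexivity. Qed.
Lemma csum_nil {X} (f : X -> ser) : csum f [] = szero.
Proof. apply functional_extensionality; intro; reflexivity. Qed.
Lemma csum_cons {X} (f : X -> ser) x l : csum f (x :: l) = sadd (f x) (csum f l).
Proof. apply functional_extensionality; intro; reflexivity. Qed.

Lemma csum_ext_in {X} (f g : X -> ser) l : (forall x, In x l -> f x = g x) -> csum f l = csum g l.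
Proof.
  intros H. apply functional_extensionality; intro w. apply cs_ext_in. intros x Hx. rewrite H; auto.
Qed.

Ltac sext := apply functional_extensionality; let w := fresh "w" in intro w.

Lemma ser_mul_cs P Q w :
  ser_mul P Q w = cs (fun k => Cmul (P (firstn k w)) (Q (skipn k w))) (seq 0 (S (length w))).
Proof. reflexivity. Qed.

Lemma smul_add_l P Q Z : ser_mul (sadd P Q) Z = sadd (ser_mul P Z) (ser_mul Q Z).
Proof. sext. unfold sadd. rewrite !ser_mul_cs, <- cs_plus. apply cs_ext; intro; Cring. Qed.
Lemma smul_add_r P Q Z : ser_mul Z (sadd P Q) = sadd (ser_mul Z P) (ser_mul Z Q).
Proof. sext. unfold sadd. rewrite !ser_mul_cs, <- cs_plus. apply cs_ext; intro; Cring. Qed.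
Lemma smul_sub_l P Q Z : ser_mul (ssub P Q) Z = ssub (ser_mul P Z) (ser_mul Q Z).
Proof. sext. unfold ssub. rewrite !ser_mul_cs, <- cs_sub. apply cs_ext; intro; Cring. Qed.
Lemma smul_sub_r P Q Z : ser_mul Z (ssub P Q) = ssub (ser_mul Z P) (ser_mul Z Q).
Proof. sext. unfold ssub. rewrite !ser_mul_cs, <- cs_sub. apply cs_ext; intro; Cring. Qed.
Lemma smul_scal_l c P Q : ser_mul (sscal c P) Q = sscal c (ser_mul P Q).
Proof. sext. unfold sscal. rewrite !ser_mul_cs, <- cs_scal_l. apply cs_ext; intro; Cring. Qed.
Lemma smul_scal_r c P Q : ser_mul P (sscal c Q) = sscal c (ser_mul P Q).
Proof. sext. unfold sscal. rewrite !ser_mul_cs, <- cs_scal_l. apply cs_ext; intro; Cring. Qed.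
Lemma smul_zero_l Z : ser_mul szero Z = szero.
Proof. sext. rewrite ser_mul_cs. apply cs_zero. intros; apply Cmul_0_l. Qed.
Lemma smul_zero_r Z : ser_mul Z szero = szero.
Proof. sext. rewrite ser_mul_cs. apply cs_zero. intros; apply Cmul_0_r. Qed.

Lemma smul_csum_l {X} (f : X -> ser) l Z : ser_mul (csum f l) Z = csum (fun x => ser_mul (f x) Z) l.
Proof. induction l; [rewrite !csum_nil, smul_zero_l; auto|]. rewrite !csum_cons, smul_add_l, IHl; auto. Qed.
Lemma smul_csum_r {X} (f : X -> ser) l Z : ser_mul Z (csum f l) = csum (fun x => ser_mul Z (f x)) l.
Proof. induction l; [rewrite !csum_nil, smul_zero_r; auto|]. rewrite !csum_cons, smul_add_r, IHl; auto. Qed.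

Lemma smul_one_l P : ser_mul ser_one P = P.
Proof.
  sext. rewrite ser_mul_cs, cs_seq_shift. simpl firstn; simpl skipn. unfold ser_one at 1.
  rewrite Cmul_1_l, cs_zero; [apply Cadd_0_r|].
  intros k Hk. apply in_seq in Hk. destruct w; simpl in Hk; [lia|]. apply Cmul_0_l.
Qed.

Lemma smul_one_r P : ser_mul P ser_one = P.
Proof.
  sext. rewrite ser_mul_cs, cs_seq_S, firstn_all, skipn_all. simpl ser_one.
  rewrite Cmul_1_r, cs_zero; [apply Cadd_0_l|].
  intros k Hk. apply in_seq in Hk. unfold ser_one.
  destruct (skipn k w) eqn:E; [|apply Cmul_0_r].
  apply (f_equal (@length nat)) in E. rewrite length_skipn in E. simpl in E. lia.
Qed.

Lemma smul_assoc P Q Z : ser_mul P (ser_mul Q Z) = ser_mul (ser_mul P Q) Z.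
Proof.
  sext. rewrite !ser_mul_cs.
  set (g := fun j l => Cmul (Cmul (P (firstn j w)) (Q (firstn l (skipn j w)))) (Z (skipn l (skipn j w)))).
  transitivity (cs (fun j => cs (fun l => g j l) (seq 0 (S (length w - j)))) (seq 0 (S (length w)))).
  - apply cs_ext_in. intros j Hj. rewrite ser_mul_cs, length_skipn, <- cs_scal_l.
    apply cs_ext; intro l. unfold g. apply Cmul_assoc.
  - rewrite <- cs_reindex. apply cs_ext_in. intros k Hk. apply in_seq in Hk.
    rewrite ser_mul_cs, firstn_length_le, <- cs_scal_r by lia.
    apply cs_ext_in. intros j Hj. apply in_seq in Hj. unfold g.
    rewrite firstn_firstn, firstn_skipn_comm, skipn_skipn.
    replace (Nat.min j k) with j by lia. replace (j + (k - j))%nat with k by lia.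
    replace (k - j + j)%nat with k by lia. reflexivity.
Qed.

Lemma mono_app u v T : mono (u ++ v) T = ser_mul (mono u T) (mono v T).
Proof.
  induction u; simpl app; [rewrite mono_nil, smul_one_l; reflexivity|].
  rewrite !mono_cons, IHu, smul_assoc; reflexivity.
Qed.

Lemma ssub_mul_decomp P Q P' Q' :
  ssub (ser_mul P Q) (ser_mul P' Q') = sadd (ser_mul P (ssub Q Q')) (ser_mul (ssub P P') Q').
Proof. rewrite smul_sub_r, smul_sub_l. sext. unfold ssub, sadd. Cring. Qed.

Lemma ssub_csum {X} (f g : X -> ser) l : ssub (csum f l) (csum g l) = csum (fun x => ssub (f x) (g x)) l.
Proof. sext. unfold ssub, csum. rewrite cs_sub. reflexivity. Qed.
Lemma ssub_sscal c P Q : ssub (sscal c P) (sscal c Q) = sscal c (ssub P Q).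
Proof. sext. unfold ssub, sscal. Cring. Qed.
Lemma ssub_self P : ssub P P = szero.
Proof. sext. unfold ssub, szero. apply Csub_diag. Qed.
Lemma ssub_szero P : ssub P szero = P.
Proof. sext. unfold ssub, szero. Cring. Qed.
Lemma ssub_tele P Q Z : ssub P Z = sadd (ssub P Q) (ssub Q Z).
Proof. sext. unfold ssub, sadd. Cring. Qed.
Lemma ssub_swap P Q : ssub P Q = sscal (mkC (-1) 0) (ssub Q P).
Proof. sext. unfold ssub, sscal. Cring. Qed.

Lemma ssub_zero_eq P Q w : ssub P Q w = C0 -> P w = Q w.
Proof. unfold ssub. intros E. replace (P w) with (Cadd (Csub (P w) (Q w)) (Q w)) by Cring. rewrite E. apply Cadd_0_l. Qed.

Lemma supp_mul m P Q : supported m P -> supported m Q -> supported m (ser_mul P Q).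
Proof.
  intros HP HQ w Hw. rewrite ser_mul_cs. apply cs_zero. intros k _.
  destruct (valid_word_dec m (firstn k w)) as [H1|H1]; [|rewrite HP; auto; apply Cmul_0_l].
  destruct (valid_word_dec m (skipn k w)) as [H2|H2]; [|rewrite HQ; auto; apply Cmul_0_r].
  exfalso. apply Hw. rewrite <- (firstn_skipn k w). apply Forall_app. auto.
Qed.
Lemma supp_one m : supported m ser_one.
Proof. intros w Hw. destruct w; auto. exfalso; apply Hw; constructor. Qed.
Lemma supp_add m P Q : supported m P -> supported m Q -> supported m (sadd P Q).
Proof. intros HP HQ w Hw. unfold sadd. rewrite HP, HQ; auto. apply Cadd_0_l. Qed.
Lemma supp_sub m P Q : supported m P -> supported m Q -> supported m (ssub P Q).
Proof. intros HP HQ w Hw. unfold ssub. rewrite HP, HQ; auto. apply Csub_diag. Qed.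
Lemma supp_scal m c P : supported m P -> supported m (sscal c P).
Proof. intros HP w Hw. unfold sscal. rewrite HP; auto. apply Cmul_0_r. Qed.

(* ** Weighted l^1 norms *)

Definition blk m (P : ser) d := rs (fun w => Cmod (P w)) (words m d).
Definition pn m r (P : ser) N := rs (fun d => r ^ d * blk m P d) (seq 0 (S N)).
Definition NB m r (P : ser) B := supported m P /\ forall N, pn m r P N <= B.

Lemma blk_nonneg m P d : 0 <= blk m P d.
Proof. apply rs_nonneg; intros; apply Cmod_ge0. Qed.

Lemma pn_nonneg m r P N : 0 <= r -> 0 <= pn m r P N.
Proof. intros. apply rs_nonneg; intros. apply Rmult_le_pos; [apply pow_le; auto|apply blk_nonneg]. Qed.

Lemma NB_nonneg m r P B : 0 <= r -> NB m r P B -> 0 <= B.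
Proof. intros Hr [_ H]. eapply Rle_trans; [apply (pn_nonneg m r P 0 Hr)|]. auto. Qed.

Lemma NB_weaken m r P B B' : NB m r P B -> B <= B' -> NB m r P B'.
Proof. intros [Hs H] HB. split; auto. intros N; specialize (H N); lra. Qed.

Lemma NB_rad m r r' P B : 0 <= r' <= r -> NB m r P B -> NB m r' P B.
Proof.
  intros Hr [Hs H]. split; auto. intros N. eapply Rle_trans; [|apply (H N)].
  apply rs_le; intro d. apply Rmult_le_compat_r; [apply blk_nonneg|]. apply pow_incr; lra.
Qed.

Lemma blk_bound m r P B d : 0 <= r -> NB m r P B -> r ^ d * blk m P d <= B.
Proof.
  intros Hr [_ H]. eapply Rle_trans; [|apply (H d)]. unfold pn. rewrite rs_seq_S.
  assert (0 <= rs (fun e => r ^ e * blk m P e) (seq 0 d)); [|lra].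
  apply rs_nonneg; intros. apply Rmult_le_pos; [apply pow_le; auto|apply blk_nonneg].
Qed.

Lemma rs_member_le {X} (f : X -> R) x l : In x l -> (forall y, In y l -> 0 <= f y) -> f x <= rs f l.
Proof.
  induction l as [|y l IH]; intros Hin Hpos; [destruct Hin|]. rewrite rs_cons.
  assert (0 <= rs f l) by (apply rs_nonneg; intros; apply Hpos; simpl; auto).
  destruct Hin as [<-|Hin]; [lra|].
  pose proof (Hpos y (or_introl eq_refl)). assert (f x <= rs f l) by (apply IH; auto; intros; apply Hpos; simpl; auto). lra.
Qed.

Lemma coef_bound m r P B w : 0 <= r -> NB m r P B -> valid_word m w ->
  r ^ (length w) * Cmod (P w) <= B.
Proof.
  intros Hr HB Hw. eapply Rle_trans; [|apply (blk_bound m r P B (length w) Hr HB)].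
  apply Rmult_le_compat_l; [apply pow_le; auto|].
  apply (rs_member_le (fun v => Cmod (P v))); [apply In_words; auto|intros; apply Cmod_ge0].
Qed.

Lemma coef_small m r P B w : 0 < r -> NB m r P B -> Cmod (P w) <= B / r ^ length w.
Proof.
  intros Hr HB. assert (0 < r ^ length w) by (apply pow_lt; auto).
  destruct (valid_word_dec m w) as [Hv|Hv].
  - pose proof (coef_bound m r P B w ltac:(lra) HB Hv).
    apply Rmult_le_reg_l with (r ^ length w); auto. field_simplify; lra.
  - pose proof (NB_nonneg m r P B ltac:(lra) HB). destruct HB as [Hs _].
    rewrite Hs, Cmod_C0 by auto. apply Rmult_le_pos; [lra|left; apply Rinv_0_lt_compat; lra].
Qed.

Lemma NB_small_zero m r P : 0 < r -> (forall eps, eps > 0 -> NB m r P eps) -> forall w, P w = C0.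
Proof.
  intros Hr H w. apply Cmod_small_eq. intros eps He.
  assert (0 < r ^ length w) by (apply pow_lt; auto).
  pose proof (coef_small m r P _ w Hr (H (eps * r ^ length w / 2) ltac:(apply Rdiv_lt_0_compat; nra))).
  replace (eps * r ^ length w / 2 / r ^ length w) with (eps / 2) in * by (field; lra). lra.
Qed.

Lemma NB_geom_zero m r P c q : 0 < r -> 0 <= c -> 0 <= q < 1 -> (forall k, NB m r P (c * q ^ k)) ->
  forall w, P w = C0.
Proof.
  intros Hr Hc Hq H. apply (NB_small_zero m r); auto. intros eps He.
  destruct (geom_small c q eps Hc Hq He) as [N HN].
  eapply NB_weaken; [apply (H N)|]. left. apply HN. lia.
Qed.

Lemma NB_add m r P Q B1 B2 : 0 <= r -> NB m r P B1 -> NB m r Q B2 -> NB m r (sadd P Q) (B1 + B2).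
Proof.
  intros Hr [HsP HP] [HsQ HQ]. split; [apply supp_add; auto|].
  intros N. specialize (HP N). specialize (HQ N). eapply Rle_trans; [|apply Rplus_le_compat; eauto].
  unfold pn. rewrite <- rs_plus. apply rs_le; intro d. rewrite <- Rmult_plus_distr_l.
  apply Rmult_le_compat_l; [apply pow_le; auto|]. unfold blk. rewrite <- rs_plus.
  apply rs_le; intro. apply Cmod_tri.
Qed.

Lemma NB_scal m r c P B : 0 <= r -> NB m r P B -> NB m r (sscal c P) (Cmod c * B).
Proof.
  intros Hr [HsP HP]. split; [apply supp_scal; auto|]. intros N.
  eapply Rle_trans; [|apply Rmult_le_compat_l; [apply Cmod_ge0|apply (HP N)]].
  unfold pn. rewrite <- rs_scal. apply rs_le; intro d. unfold blk.
  rewrite (rs_ext (fun w => Cmod (sscal c P w)) (fun w => Cmod c * Cmod (P w))) by (intro; apply Cmod_mul).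
  rewrite rs_scal. right; ring.
Qed.

Lemma NB_sub m r P Q B1 B2 : 0 <= r -> NB m r P B1 -> NB m r Q B2 -> NB m r (ssub P Q) (B1 + B2).
Proof.
  intros Hr HP HQ. replace (ssub P Q) with (sadd P (sscal (mkC (-1) 0) Q)) by (sext; unfold ssub, sadd, sscal; Cring).
  eapply NB_weaken; [apply NB_add, NB_scal; eauto|]. rewrite Cmod_minus_one. lra.
Qed.

Lemma NB_ssub_sym m r P Q B : 0 <= r -> NB m r (ssub P Q) B -> NB m r (ssub Q P) B.
Proof.
  intros Hr H. rewrite ssub_swap. eapply NB_weaken; [apply NB_scal; eauto|]. rewrite Cmod_minus_one. lra.
Qed.

Lemma NB_zero m r : NB m r szero 0.
Proof.
  split; [intros w _; reflexivity|]. intros N. right. apply rs_zero. intros d _. unfold blk.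
  rewrite rs_zero; [ring|]. intros; apply Cmod_C0.
Qed.

Lemma NB_csum {X} m r (f : X -> ser) (b : X -> R) l : 0 <= r ->
  (forall x, In x l -> NB m r (f x) (b x)) -> NB m r (csum f l) (rs b l).
Proof.
  intros Hr. induction l as [|x l IH]; intros H; [rewrite csum_nil, rs_nil; apply NB_zero|].
  rewrite csum_cons, rs_cons. apply NB_add; auto; [apply H; simpl; auto|].
  apply IH; intros; apply H; simpl; auto.
Qed.

Lemma blk_mul m P Q d :
  blk m (ser_mul P Q) d <= rs (fun i => blk m P i * blk m Q (d - i)) (seq 0 (S d)).
Proof.
  unfold blk. eapply Rle_trans; [apply rs_le; intro w; rewrite ser_mul_cs; apply Cmod_cs|].
  rewrite (rs_ext _ (fun w => rs (fun k => Cmod (P (firstn k w)) * Cmod (Q (skipn k w)))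
                                 (seq 0 (S (length w))))) by (intro; apply rs_ext; intro; apply Cmod_mul).
  rewrite (rs_split m d (fun u v => Cmod (P u) * Cmod (Q v))). right.
  apply rs_ext; intro i. rewrite Rmult_comm, <- rs_scal. apply rs_ext; intro u.
  rewrite Rmult_comm, <- rs_scal. reflexivity.
Qed.

Lemma NB_mul m r P Q B1 B2 : 0 <= r -> NB m r P B1 -> NB m r Q B2 -> NB m r (ser_mul P Q) (B1 * B2).
Proof.
  intros Hr [HsP HP] [HsQ HQ]. split; [apply supp_mul; auto|]. intros N.
  set (g := fun i j => (r ^ i * blk m P i) * (r ^ j * blk m Q j)).
  apply Rle_trans with (rs (fun d => rs (fun i => g i (d - i)%nat) (seq 0 (S d))) (seq 0 (S N))).
  { apply rs_le; intro d. eapply Rle_trans; [apply Rmult_le_compat_l; [apply pow_le; auto|apply blk_mul]|].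
    rewrite <- rs_scal. right. apply rs_ext_in. intros i Hi. apply in_seq in Hi. unfold g.
    replace (r ^ d) with (r ^ i * r ^ (d - i)) by (rewrite <- pow_add; f_equal; lia). ring. }
  rewrite rs_reindex.
  apply Rle_trans with (rs (fun i => (r ^ i * blk m P i) * B2) (seq 0 (S N))).
  - apply rs_le; intro i. unfold g. rewrite rs_scal. apply Rmult_le_compat_l; [|apply HQ].
    apply Rmult_le_pos; [apply pow_le; auto|apply blk_nonneg].
  - rewrite (rs_ext _ (fun i => B2 * (r ^ i * blk m P i))) by (intro; ring). rewrite rs_scal.
    pose proof (NB_nonneg m r Q B2 Hr (conj HsQ HQ)). specialize (HP N). unfold pn in HP. nra.
Qed.

Lemma rs_single_le (f : nat -> R) k n : (forall x, x <> k -> f x = 0) -> 0 <= f k ->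
  rs f (seq 0 n) <= f k.
Proof.
  intros H Hk. destruct (lt_dec k n) as [Hlt|Hge].
  - rewrite rs_as_re_cs, (cs_single _ k n Hlt); [simpl; lra|].
    intros x Hx. rewrite H by auto. reflexivity.
  - rewrite rs_zero; auto. intros x Hx. apply in_seq in Hx. apply H. lia.
Qed.

Lemma NB_homogeneous m r P k : 0 <= r -> supported m P -> (forall d, d <> k -> blk m P d = 0) ->
  NB m r P (r ^ k * blk m P k).
Proof.
  intros Hr Hs H. split; auto. intros N. apply (rs_single_le (fun d => r ^ d * blk m P d)).
  - intros d Hd. rewrite H by auto. ring.
  - apply Rmult_le_pos; [apply pow_le; auto|apply blk_nonneg].
Qed.

Lemma blk_zero_words m P d : (forall w, length w = d -> P w = C0) -> blk m P d = 0.
Proof.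
  intros H. unfold blk. apply rs_zero. intros w Hw. apply In_words in Hw.
  rewrite H; [apply Cmod_C0|tauto].
Qed.

Lemma NB_one m r : 0 <= r -> NB m r ser_one 1.
Proof.
  intros Hr. eapply NB_weaken; [apply (NB_homogeneous m r ser_one 0); auto using supp_one|].
  - intros d Hd. apply blk_zero_words. intros w Hw. destruct w; simpl in Hw; [lia|reflexivity].
  - unfold blk. rewrite words_0, rs_cons, rs_nil. simpl. rewrite Cmod_C1. lra.
Qed.

Lemma NB_var m r i : (i < m)%nat -> 0 <= r -> NB m r (svar i) r.
Proof.
  intros Hi Hr.
  assert (Hs : supported m (svar i)).
  { intros w Hw. unfold svar. destruct (list_eq_dec Nat.eq_dec w [i]); auto.
    subst. exfalso; apply Hw. repeat constructor; auto. }
  eapply NB_weaken; [apply (NB_homogeneous m r (svar i) 1); auto|].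
  - intros d Hd. apply blk_zero_words. intros w Hw. unfold svar.
    destruct (list_eq_dec Nat.eq_dec w [i]); auto. subst w. simpl in Hw. lia.
  - unfold blk. rewrite words_1, rs_map, rs_as_re_cs, (cs_single _ i m Hi).
    + unfold svar. destruct (list_eq_dec Nat.eq_dec [i] [i]); [|congruence]. simpl. rewrite Cmod_C1. lra.
    + intros x Hx. unfold svar. destruct (list_eq_dec Nat.eq_dec [x] [i]) as [E|]; [inversion E; lia|].
      rewrite Cmod_C0. reflexivity.
Qed.

Lemma NB_mono m r q T M : 0 <= r -> (forall x, In x q -> NB m r (T x) M) ->
  NB m r (mono q T) (M ^ length q).
Proof.
  intros Hr. induction q as [|x q IH]; intros H; [apply NB_one; auto|].
  rewrite mono_cons. simpl length. simpl pow.
  apply NB_mul; auto; [apply H; simpl; auto|]. apply IH. intros; apply H; simpl; auto.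
Qed.

(* Fatou's lemma: norm bounds pass to coefficientwise limits. *)
Lemma NB_limit m r (P : nat -> ser) (Q : ser) B : 0 <= r ->
  (forall w, cvC (fun k => P k w) (Q w)) -> (forall k, NB m r (P k) B) -> NB m r Q B.
Proof.
  intros Hr Hcv HB. split.
  - intros w Hw. apply (cvC_unique (fun k => P k w)); auto.
    apply cvC_const with 0%nat. intros k _. destruct (HB k) as [Hs _]. apply Hs; auto.
  - intros N. apply Un_cv_le with (fun k => pn m r (P k) N); [|intros k; apply HB].
    apply Un_cv_rs. intros d _. apply Un_cv_scal. apply Un_cv_rs.
    intros w _. apply Un_cv_Cmod. auto.
Qed.

Lemma NB_sub_limit m r (u v : nat -> ser) U V B : 0 <= r ->
  (forall w, cvC (fun D => u D w) (U w)) -> (forall w, cvC (fun D => v D w) (V w)) ->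
  (forall D, NB m r (ssub (u D) (v D)) B) -> NB m r (ssub U V) B.
Proof.
  intros Hr Hu Hv HB. apply NB_limit with (fun D => ssub (u D) (v D)); auto.
  intros w. unfold ssub. apply cvC_sub; auto.
Qed.

Lemma has_norm_NB m r P l : 0 <= r -> supported m P -> has_norm m r P l -> NB m r P l.
Proof.
  intros Hr Hs Hl. split; auto. intros N.
  apply (infsum_partial_le (fun d => r ^ d * blk m P d)); auto.
  intros d. apply Rmult_le_pos; [apply pow_le; auto|apply blk_nonneg].
Qed.

Lemma NB_has_norm m r P B : 0 <= r -> NB m r P B -> exists l, has_norm m r P l /\ l <= B.
Proof.
  intros Hr [Hs H]. apply (infsum_bounded (fun d => r ^ d * blk m P d)); auto.
  intros d. apply Rmult_le_pos; [apply pow_le; auto|apply blk_nonneg].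
Qed.

Lemma blk_geom m R G h d M : 0 < R -> NB m R G h -> 0 <= M -> blk m G d * M ^ d <= h * (M / R) ^ d.
Proof.
  intros HR HG HM. pose proof (blk_bound m R G h d ltac:(lra) HG).
  assert (0 < R ^ d) by (apply pow_lt; auto).
  unfold Rdiv. rewrite Rpow_mult_distr, pow_inv.
  apply Rmult_le_reg_l with (R ^ d); auto.
  replace (R ^ d * (h * (M ^ d * / R ^ d))) with (h * M ^ d) by (field; lra).
  pose proof (pow_le M d HM). nra.
Qed.

Definition serlim (u : nat -> ser) : ser := fun w => limC (fun k => u k w).

Lemma NB_cauchy_limit m r (u : nat -> ser) c q : 0 < r -> 0 <= c -> 0 <= q < 1 ->
  (forall k t, NB m r (ssub (u (k + t)%nat) (u k)) (c * q ^ k)) ->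
  (forall w, cvC (fun k => u k w) (serlim u w)) /\ forall k, NB m r (ssub (serlim u) (u k)) (c * q ^ k).
Proof.
  intros Hr Hc Hq H.
  assert (Hcv : forall w, cvC (fun k => u k w) (serlim u w)).
  { intros w. apply limC_spec, cvC_cauchy. intros eps He.
    assert (Hrw : 0 < r ^ length w) by (apply pow_lt; auto).
    destruct (geom_small (c / r ^ length w) q eps) as [N HN]; auto.
    { apply Rmult_le_pos; [lra|left; apply Rinv_0_lt_compat; auto]. }
    assert (Hgen : forall k t, (k >= N)%nat -> Cmod (Csub (u (k + t)%nat w) (u k w)) < eps).
    { intros k t Hk. eapply Rle_lt_trans; [apply (coef_small m r _ _ w Hr (H k t))|].
      specialize (HN k Hk). replace (c * q ^ k / r ^ length w) with (c / r ^ length w * q ^ k)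
        by (field; lra). exact HN. }
    exists N. intros k k' Hk Hk'. destruct (le_lt_dec k k').
    - rewrite Cmod_sub_sym. replace k' with (k + (k' - k))%nat by lia. apply Hgen; lia.
    - replace k with (k' + (k - k'))%nat by lia. apply Hgen; lia. }
  split; auto. intros k.
  apply NB_limit with (fun t => ssub (u (k + t)%nat) (u k)); [lra| |auto].
  intros w. unfold ssub. apply cvC_sub; [apply (cvC_shift (fun t => u t w)), Hcv|].
  apply cvC_const with 0%nat; auto.
Qed.

(* ** Evaluation of a series at a tuple of series *)

Definition eterm m (G : ser) (T : nat -> ser) d : ser :=
  csum (fun q => sscal (G q) (mono q T)) (words m d).
Definition evp m (G : ser) (T : nat -> ser) D : ser := csum (fun d => eterm m G T d) (seq 0 (S D)).

Lemma evp_w m G T D w :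
  evp m G T D w = cs (fun d => cs (fun q => Cmul (G q) (mono q T w)) (words m d)) (seq 0 (S D)).
Proof. reflexivity. Qed.

Lemma eval_is_iff m G T V : eval_is m G T V <-> forall w, cvC (fun D => evp m G T D w) (V w).
Proof. unfold eval_is. split; intros H w; apply Cinfinite_sum_cvC, H. Qed.

Lemma evp_add m P Q T D : evp m (sadd P Q) T D = sadd (evp m P T D) (evp m Q T D).
Proof.
  sext. unfold sadd at 2. rewrite !evp_w, <- cs_plus.
  apply cs_ext; intro d. rewrite <- cs_plus. apply cs_ext; intro q. unfold sadd. Cring.
Qed.
Lemma evp_sub m P Q T D : evp m (ssub P Q) T D = ssub (evp m P T D) (evp m Q T D).
Proof.
  sext. unfold ssub at 2. rewrite !evp_w, <- cs_sub.
  apply cs_ext; intro d. rewrite <- cs_sub. apply cs_ext; intro q. unfold ssub. Cring.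
Qed.
Lemma evp_scal m c P T D : evp m (sscal c P) T D = sscal c (evp m P T D).
Proof.
  sext. unfold sscal at 2. rewrite !evp_w, <- cs_scal_l.
  apply cs_ext; intro d. rewrite <- cs_scal_l. apply cs_ext; intro q. unfold sscal. Cring.
Qed.
Lemma evp_csum {X} m (f : X -> ser) l T D : evp m (csum f l) T D = csum (fun x => evp m (f x) T D) l.
Proof.
  induction l as [|x l IH].
  - rewrite !csum_nil. sext. rewrite evp_w. apply cs_zero; intros; apply cs_zero; intros. apply Cmul_0_l.
  - rewrite !csum_cons, evp_add, IH. reflexivity.
Qed.

Lemma evp_ext_T m G T T' D : (forall x, (x < m)%nat -> T x = T' x) -> evp m G T D = evp m G T' D.
Proof.
  intros H. sext. rewrite !evp_w. apply cs_ext; intro d.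
  apply cs_ext_in; intros q Hq. apply In_words in Hq. destruct Hq as [_ Hv].
  assert (E : map T q = map T' q); [|unfold mono; rewrite E; reflexivity].
  apply map_ext_in. intros x Hx. apply H. eapply Forall_forall in Hv; eauto.
Qed.

Lemma evp_stable m G T K D : (forall q, (K < length q)%nat -> G q = C0) -> (K <= D)%nat ->
  evp m G T D = evp m G T K.
Proof.
  intros HG HD. sext. rewrite !evp_w. apply cs_trim; auto. intros d Hd.
  apply cs_zero. intros q Hq. apply In_words in Hq. rewrite HG by lia. apply Cmul_0_l.
Qed.

Lemma evp_svar m i T D : (i < m)%nat -> (1 <= D)%nat -> evp m (svar i) T D = T i.
Proof.
  intros Hi HD. rewrite (evp_stable m (svar i) T 1 D); auto.
  - sext. rewrite evp_w. simpl seq. rewrite cs_cons, cs_cons, cs_nil, Cadd_0_r.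
    rewrite words_0, cs_cons, cs_nil. unfold svar at 1. simpl. rewrite Cmul_0_l, !Cadd_0_l.
    rewrite app_nil_r, cs_map, (cs_single _ i m Hi).
    + unfold svar. destruct (list_eq_dec Nat.eq_dec [i] [i]); [|congruence].
      rewrite Cmul_1_l, mono_cons, mono_nil, smul_one_r. reflexivity.
    + intros x Hx. unfold svar. destruct (list_eq_dec Nat.eq_dec [x] [i]) as [E|]; [inversion E; congruence|].
      apply Cmul_0_l.
  - intros q Hq. unfold svar. destruct (list_eq_dec Nat.eq_dec q [i]); auto. subst; simpl in Hq; lia.
Qed.

Lemma NB_eterm m p r G T M d : 0 <= r -> (forall x, (x < m)%nat -> NB p r (T x) M) ->
  NB p r (eterm m G T d) (blk m G d * M ^ d).
Proof.
  intros Hr HT. unfold eterm, blk. rewrite Rmult_comm, <- rs_scal.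
  rewrite (rs_ext (fun x => M ^ d * Cmod (G x)) (fun x => Cmod (G x) * M ^ d)) by (intro; ring).
  apply NB_csum; auto. intros q Hq. apply In_words in Hq. destruct Hq as [Hl Hv].
  apply NB_scal; auto. rewrite <- Hl. apply NB_mono; auto. intros x Hx.
  apply HT. eapply Forall_forall in Hv; eauto.
Qed.

Lemma NB_evp m p r G T M D : 0 <= r -> (forall x, (x < m)%nat -> NB p r (T x) M) ->
  NB p r (evp m G T D) (rs (fun d => blk m G d * M ^ d) (seq 0 (S D))).
Proof. intros. apply NB_csum; auto. intros; apply NB_eterm; auto. Qed.

Definition evalf m (G : ser) (T : nat -> ser) : ser := serlim (evp m G T).

Lemma evalf_spec m p G T rad r h M :
  0 < r -> 0 <= M -> M < rad -> NB m rad G h -> (forall x, (x < m)%nat -> NB p r (T x) M) ->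
  (forall w, cvC (fun D => evp m G T D w) (evalf m G T w)) /\
  (forall D, NB p r (ssub (evalf m G T) (evp m G T D)) (h * (M / rad) / (1 - M / rad) * (M / rad) ^ D)).
Proof.
  intros Hr HM HMR HG HT. set (rho := M / rad).
  assert (Hrho : 0 <= rho < 1).
  { unfold rho. split; [apply Rmult_le_pos; [lra|left; apply Rinv_0_lt_compat; lra]|].
    apply Rmult_lt_reg_r with rad; [lra|]. unfold Rdiv. rewrite Rmult_assoc, Rinv_l by lra. lra. }
  assert (Hh : 0 <= h) by (eapply NB_nonneg; [|exact HG]; lra).
  apply (NB_cauchy_limit p r (evp m G T)); auto.
  { apply Rmult_le_pos; [apply Rmult_le_pos; lra|left; apply Rinv_0_lt_compat; lra]. }
  intros D k.
  assert (Hdiff : ssub (evp m G T (D + k)) (evp m G T D) = csum (fun d => eterm m G T d) (seq (S D) k)).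
  { sext. unfold ssub, evp, csum. replace (S (D + k)) with (S D + k)%nat by lia.
    rewrite seq_app, cs_app. simpl (0 + S D)%nat. Cring. }
  rewrite Hdiff. eapply NB_weaken; [apply NB_csum; [lra|intros; apply NB_eterm; eauto; lra]|].
  eapply Rle_trans; [apply rs_le; intro d; apply (blk_geom m rad G h d M); auto; lra|].
  rewrite rs_scal. fold rho. eapply Rle_trans; [apply Rmult_le_compat_l; [lra|apply geom_tail; auto]|].
  right. simpl. field. lra.
Qed.

(* ** Contraction estimates for series without constant and Y-linear terms *)

(* Telescoping bound for the difference of two monomials. *)
Lemma NB_mono_lip p r q T T' M (kb : nat -> R) : 0 <= r -> 0 <= M ->
  (forall x, In x q -> NB p r (T x) M /\ NB p r (T' x) M /\ NB p r (ssub (T x) (T' x)) (kb x)) ->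
  NB p r (ssub (mono q T) (mono q T')) (rs kb q * M ^ (pred (length q))).
Proof.
  intros Hr HM. induction q as [|x q IH]; intros H.
  - rewrite ssub_self, rs_nil, Rmult_0_l. apply NB_zero.
  - rewrite !mono_cons, ssub_mul_decomp.
    destruct (H x (or_introl eq_refl)) as [H1 [H2 H3]].
    assert (IH' : NB p r (ssub (mono q T) (mono q T')) (rs kb q * M ^ pred (length q)))
      by (apply IH; intros; apply H; simpl; auto).
    assert (Hm : NB p r (mono q T') (M ^ length q)) by (apply NB_mono; auto; intros; apply H; simpl; auto).
    eapply NB_weaken; [apply NB_add; [auto|apply NB_mul; eauto|apply NB_mul; eauto]|].
    rewrite rs_cons. right. destruct q; simpl; [rewrite rs_nil|]; ring.
Qed.

Lemma NB_eterm_lip m p r G T T' M kb d : 0 <= r -> 0 <= M ->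
  (forall x, (x < m)%nat -> NB p r (T x) M /\ NB p r (T' x) M /\ NB p r (ssub (T x) (T' x)) (kb x)) ->
  NB p r (ssub (eterm m G T d) (eterm m G T' d))
     (rs (fun q => Cmod (G q) * (rs kb q * M ^ (pred d))) (words m d)).
Proof.
  intros Hr HM H. unfold eterm. rewrite ssub_csum. apply NB_csum; auto.
  intros q Hq. apply In_words in Hq. destruct Hq as [Hl Hv]. rewrite ssub_sscal. apply NB_scal; auto.
  rewrite <- Hl. apply NB_mono_lip; auto. intros x Hx. apply H. eapply Forall_forall in Hv; eauto.
Qed.

Lemma pair_tuple_lt n U V x : (x < n)%nat -> pair_tuple n U V x = U x.
Proof. intros. unfold pair_tuple. destruct (Nat.ltb_spec x n); auto; lia. Qed.
Lemma pair_tuple_ge n U V x : (x >= n)%nat -> pair_tuple n U V x = V (x - n)%nat.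
Proof. intros. unfold pair_tuple. destruct (Nat.ltb_spec x n); auto; lia. Qed.

Lemma NB_pair_tuple n r B W M : (forall i, (i < n)%nat -> NB n r (B i) M) ->
  (forall j, (j < n)%nat -> NB n r (W j) M) ->
  forall x, (x < 2 * n)%nat -> NB n r (pair_tuple n B W x) M.
Proof.
  intros HB HW x Hx. destruct (Nat.ltb_spec x n).
  - rewrite pair_tuple_lt by auto. auto.
  - rewrite pair_tuple_ge by auto. apply HW. lia.
Qed.

Lemma sum_from2 (g : nat -> R) c s D : 0 <= c -> 0 <= s < 1 -> g 0%nat <= 0 -> g 1%nat <= 0 ->
  (forall d, (d >= 2)%nat -> g d <= c * s ^ (pred d)) -> rs g (seq 0 (S D)) <= c * (s / (1 - s)).
Proof.
  intros Hc Hs H0 H1 Hd.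
  assert (Hpos : 0 <= c * (s / (1 - s))).
  { apply Rmult_le_pos; auto. apply Rmult_le_pos; [lra|]. left; apply Rinv_0_lt_compat; lra. }
  destruct D; [unfold rs; simpl; lra|].
  simpl seq. rewrite !rs_cons.
  assert (rs g (seq 2 D) <= c * (s / (1 - s))); [|lra].
  eapply Rle_trans; [apply rs_le_in; intros d Hd'; apply in_seq in Hd'; apply Hd; lia|].
  rewrite rs_scal. apply Rmult_le_compat_l; auto. rewrite rs_seq_shift. simpl pred.
  eapply Rle_trans; [apply geom_tail; auto|]. simpl. lra.
Qed.

Lemma pow_2d (x : R) d : 0 <= x -> INR d * x ^ pred d <= (2 * x) ^ pred d.
Proof.
  intros Hx. destruct d as [|d]; [simpl; lra|]. simpl pred. rewrite Rpow_mult_distr.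
  apply Rmult_le_compat_r; [apply pow_le; auto|].
  induction d; [simpl; lra|]. rewrite S_INR. simpl pow.
  assert (1 <= 2 ^ d) by (apply pow_R1_Rle; lra). lra.
Qed.

Lemma rs_le_length q (kb : nat -> R) K : (forall x, In x q -> kb x <= K) -> rs kb q <= INR (length q) * K.
Proof.
  induction q as [|x q IH]; intros H; [rewrite rs_nil; simpl; lra|].
  rewrite rs_cons. simpl length. rewrite S_INR.
  assert (kb x <= K) by (apply H; simpl; auto).
  assert (rs kb q <= INR (length q) * K) by (apply IH; intros; apply H; simpl; auto). lra.
Qed.

(* The contraction ratio of W |-> G(B, W) on the ball of radius M. *)
Definition lip_const (rad h M : R) : R := h / rad * ((2 * M / rad) / (1 - 2 * M / rad)).

(* Degree >= 1 weight of the Lipschitz estimate: a word of length d changes by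
   at most d K M^(d-1), and its coefficient is at most h / R^d. *)
Lemma lip_weight m R G h kb K M d : 0 < R -> 0 <= M -> 0 <= K -> NB m R G h ->
  (forall x, kb x <= K) -> (d >= 1)%nat ->
  rs (fun q => Cmod (G q) * (rs kb q * M ^ (pred d))) (words m d) <= K * h / R * (2 * M / R) ^ pred d.
Proof.
  intros HR HM HK HG Hkb Hd.
  apply Rle_trans with (rs (fun q => (K * (2 * M) ^ pred d) * Cmod (G q)) (words m d)).
  - apply rs_le_in. intros q Hq. rewrite Rmult_comm. apply Rmult_le_compat_r; [apply Cmod_ge0|].
    apply In_words in Hq. destruct Hq as [Hl _].
    eapply Rle_trans; [apply Rmult_le_compat_r; [apply pow_le; lra|apply (rs_le_length q kb K); auto]|].
    rewrite Hl. pose proof (pow_2d M d HM). nra.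
  - rewrite rs_scal. fold (blk m G d). destruct d as [|e]; [lia|]. simpl pred.
    pose proof (blk_bound m R G h (S e) ltac:(lra) HG) as Hb. simpl pow in Hb.
    assert (HRe : 0 < R ^ e) by (apply pow_lt; auto).
    assert (HRR : 0 < R * R ^ e) by (apply Rmult_lt_0_compat; auto).
    assert (Hb' : blk m G (S e) <= h / (R * R ^ e)).
    { apply Rmult_le_reg_l with (R * R ^ e); auto.
      replace (R * R ^ e * (h / (R * R ^ e))) with h by (field; lra). lra. }
    eapply Rle_trans; [apply Rmult_le_compat_l; [apply Rmult_le_pos; [auto|apply pow_le; lra]|exact Hb']|].
    right. unfold Rdiv. rewrite (Rpow_mult_distr (2 * M) (/ R)), pow_inv. field. split; lra.
Qed.

Lemma NB_evp_lip n r G R h B W W' a M K D :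
  0 < r -> 0 <= a <= M -> 0 <= K -> 0 < R -> 2 * M / R < 1 -> NB (2 * n) R G h ->
  (forall j, (j < n)%nat -> G [(n + j)%nat] = C0) ->
  (forall i, (i < n)%nat -> NB n r (B i) a) ->
  (forall j, (j < n)%nat -> NB n r (W j) M /\ NB n r (W' j) M /\ NB n r (ssub (W j) (W' j)) K) ->
  NB n r (ssub (evp (2 * n) G (pair_tuple n B W) D) (evp (2 * n) G (pair_tuple n B W') D))
     (K * lip_const R h M).
Proof.
  intros Hr Ha HK HR Hs HG H1 HB HW.
  assert (Hh : 0 <= h) by (eapply NB_nonneg; [|exact HG]; lra).
  set (kb := fun x => if Nat.ltb x n then 0 else K).
  assert (Hkb : forall x, kb x <= K) by (intros x; unfold kb; destruct (Nat.ltb x n); lra).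
  assert (HT : forall x, (x < 2 * n)%nat ->
    NB n r (pair_tuple n B W x) M /\ NB n r (pair_tuple n B W' x) M /\
    NB n r (ssub (pair_tuple n B W x) (pair_tuple n B W' x)) (kb x)).
  { intros x Hx. unfold kb. destruct (Nat.ltb_spec x n).
    - rewrite !pair_tuple_lt, ssub_self by auto.
      split; [|split]; [eapply NB_weaken; [apply HB; auto|lra]..|apply NB_zero].
    - rewrite !pair_tuple_ge by auto. apply HW. lia. }
  unfold evp. rewrite ssub_csum.
  eapply NB_weaken; [apply NB_csum; [lra|intros d _; apply (NB_eterm_lip _ _ _ G _ _ M kb d); [lra|lra|exact HT]]|].
  replace (K * lip_const R h M) with (K * h / R * ((2 * M / R) / (1 - 2 * M / R))) by (unfold lip_const, Rdiv; ring).
  apply sum_from2.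
  - apply Rmult_le_pos; [apply Rmult_le_pos; auto|left; apply Rinv_0_lt_compat; auto].
  - split; [apply Rmult_le_pos; [lra|left; apply Rinv_0_lt_compat; auto]|auto].
  - rewrite words_0, rs_cons, !rs_nil. right; ring.
  - rewrite words_1, rs_map. right. apply rs_zero. intros x Hx. apply in_seq in Hx.
    unfold kb. rewrite rs_cons, rs_nil. destruct (Nat.ltb_spec x n); [ring|].
    replace x with (n + (x - n))%nat by lia. rewrite H1 by lia. rewrite Cmod_C0. ring.
  - intros d Hd. apply lip_weight; auto; [lra|lia].
Qed.

Lemma NB_eterm_1 m p r G T (b : nat -> R) : 0 <= r ->
  (forall x, (x < m)%nat -> NB p r (T x) (b x)) ->
  NB p r (eterm m G T 1) (rs (fun x => Cmod (G [x]) * b x) (seq 0 m)).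
Proof.
  intros Hr HT. unfold eterm. rewrite words_1.
  replace (csum (fun q => sscal (G q) (mono q T)) (map (fun i => [i]) (seq 0 m)))
    with (csum (fun x => sscal (G [x]) (T x)) (seq 0 m)).
  - apply NB_csum; auto. intros x Hx. apply in_seq in Hx. apply NB_scal; auto. apply HT; lia.
  - sext. unfold csum. rewrite cs_map. apply cs_ext; intro x.
    rewrite mono_cons, mono_nil, smul_one_r. reflexivity.
Qed.

Lemma NB_evp_self n r G R h B W a M D :
  0 < r -> 0 <= a <= M -> 0 < R -> M / R < 1 -> NB (2 * n) R G h -> G [] = C0 ->
  (forall j, (j < n)%nat -> G [(n + j)%nat] = C0) ->
  (forall i, (i < n)%nat -> NB n r (B i) a) ->
  (forall j, (j < n)%nat -> NB n r (W j) M) ->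
  NB n r (evp (2 * n) G (pair_tuple n B W) D) (h / R * a + h * ((M / R) ^ 2 / (1 - M / R))).
Proof.
  intros Hr Ha HR Hs HG H0 H1 HB HW.
  assert (Hh : 0 <= h) by (eapply NB_nonneg; [|exact HG]; lra).
  assert (HT := NB_pair_tuple n r B W M ltac:(intros; eapply NB_weaken; [apply HB; auto|lra]) HW).
  assert (HMR : 0 <= M / R) by (apply Rmult_le_pos; [lra|left; apply Rinv_0_lt_compat; auto]).
  set (b := fun d => if Nat.eqb d 0 then 0 else if Nat.eqb d 1 then h / R * a else h * (M / R) ^ d).
  unfold evp. eapply NB_weaken; [apply (NB_csum _ _ _ b); [lra|intros d _]|].
  - unfold b. destruct (Nat.eqb_spec d 0); [|destruct (Nat.eqb_spec d 1)].
    + subst. eapply NB_weaken; [apply NB_eterm; [lra|exact HT]|]. unfold blk.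
      rewrite words_0, rs_cons, !rs_nil, H0, Cmod_C0. simpl; lra.
    + subst. eapply NB_weaken; [apply (NB_eterm_1 _ _ _ G _ (fun x => if Nat.ltb x n then a else M)); [lra|]|].
      { intros x Hx. destruct (Nat.ltb_spec x n); [rewrite pair_tuple_lt by auto; apply HB; auto|apply HT; auto]. }
      apply Rle_trans with (rs (fun x => a * Cmod (G [x])) (seq 0 (2 * n))).
      { apply rs_le_in. intros x Hx. apply in_seq in Hx. destruct (Nat.ltb_spec x n); [lra|].
        replace x with (n + (x - n))%nat by lia. rewrite H1, Cmod_C0 by lia. lra. }
      rewrite rs_scal, <- (rs_map (fun q => Cmod (G q))), <- words_1. fold (blk (2 * n) G 1).
      pose proof (blk_bound _ R G h 1 ltac:(lra) HG). simpl pow in *.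
      assert (blk (2 * n) G 1 <= h / R).
      { apply Rmult_le_reg_l with R; auto. replace (R * (h / R)) with h by (field; lra). lra. }
      rewrite Rmult_comm. apply Rmult_le_compat_r; lra.
    + eapply NB_weaken; [apply NB_eterm; [lra|exact HT]|]. apply blk_geom; auto; lra.
  - assert (0 <= h * ((M / R) ^ 2 / (1 - M / R))).
    { apply Rmult_le_pos; auto. apply Rmult_le_pos; [apply pow_le; auto|left; apply Rinv_0_lt_compat; lra]. }
    assert (0 <= h / R * a) by (apply Rmult_le_pos; [apply Rmult_le_pos; [lra|left; apply Rinv_0_lt_compat; auto]|lra]).
    destruct D; [unfold b, rs; simpl; lra|].
    simpl seq. rewrite !rs_cons. unfold b at 1 2. simpl.
    assert (rs b (seq 2 D) <= h * ((M / R) ^ 2 / (1 - M / R))); [|lra].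
    rewrite (rs_ext_in _ (fun d => h * (M / R) ^ d)), rs_scal.
    + apply Rmult_le_compat_l; auto. apply geom_tail; lra.
    + intros d Hd. apply in_seq in Hd. unfold b.
      destruct (Nat.eqb_spec d 0); [lia|]. destruct (Nat.eqb_spec d 1); [lia|]. reflexivity.
Qed.

(* ** The fixed point W = G(B, W)

   Under the Lipschitz estimate with ratio 1/2 and the self-map estimate, the
   Picard iterates W_0 = 0, W_(k+1) = G(B, W_k) stay in the ball of radius rho
   and converge to a fixed point, which is unique in the ball of radius M. *)

Lemma ratio_lt_1 R M : 0 < R -> 0 <= M -> 2 * M / R < 1 -> 0 <= M / R < 1 /\ M < R.
Proof.
  intros HR HM Hs. assert (E : 2 * M / R = 2 * (M / R)) by (unfold Rdiv; ring).
  assert (0 <= M / R) by (apply Rmult_le_pos; [lra|left; apply Rinv_0_lt_compat; auto]).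
  split; [lra|]. apply Rmult_lt_reg_r with (/ R); [apply Rinv_0_lt_compat; auto|].
  rewrite Rinv_r by lra. fold (M / R). lra.
Qed.

Section Contraction.
Variables (n : nat) (r R h a M rho : R) (G B : nat -> ser).
Hypotheses (Hr : 0 < r) (HR : 0 < R) (Ha : 0 <= a) (HaM : a <= M)
  (HrhoM : 0 <= rho <= M) (Hs : 2 * M / R < 1)
  (HG : forall j, (j < n)%nat -> NB (2 * n) R (G j) h)
  (HG0 : forall j, (j < n)%nat -> G j [] = C0)
  (HG1 : forall j k, (j < n)%nat -> (k < n)%nat -> G j [(n + k)%nat] = C0)
  (HB : forall i, (i < n)%nat -> NB n r (B i) a)
  (Hlip : lip_const R h M <= 1 / 2)
  (Hself : h / R * a + h * ((M / R) ^ 2 / (1 - M / R)) <= rho).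

Lemma pair_in_ball (W : nat -> ser) : (forall j, (j < n)%nat -> NB n r (W j) M) ->
  forall x, (x < 2 * n)%nat -> NB n r (pair_tuple n B W x) M.
Proof. apply NB_pair_tuple. intros; eapply NB_weaken; [apply HB; auto|lra]. Qed.

Lemma eval_half (W W' V V' : nat -> ser) K j : (j < n)%nat -> 0 <= K ->
  (forall k, (k < n)%nat -> NB n r (W k) M /\ NB n r (W' k) M /\ NB n r (ssub (W k) (W' k)) K) ->
  (forall w, cvC (fun D => evp (2 * n) (G j) (pair_tuple n B W) D w) (V j w)) ->
  (forall w, cvC (fun D => evp (2 * n) (G j) (pair_tuple n B W') D w) (V' j w)) ->
  NB n r (ssub (V j) (V' j)) (K / 2).
Proof.
  intros Hj HK HW Hv Hv'. eapply NB_sub_limit; [lra|exact Hv|exact Hv'|]. intros D.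
  eapply NB_weaken; [apply (NB_evp_lip n r (G j) R h B W W' a M K D); auto; lra|].
  apply Rle_trans with (K * (1 / 2)); [apply Rmult_le_compat_l|]; lra.
Qed.

Lemma eval_self (W : nat -> ser) (V : ser) j : (j < n)%nat ->
  (forall k, (k < n)%nat -> NB n r (W k) M) ->
  (forall w, cvC (fun D => evp (2 * n) (G j) (pair_tuple n B W) D w) (V w)) ->
  NB n r V rho.
Proof.
  intros Hj HW Hv. apply NB_limit with (fun D => evp (2 * n) (G j) (pair_tuple n B W) D); [lra|auto|].
  intros D. eapply NB_weaken; [|exact Hself]. destruct (ratio_lt_1 R M); auto; [lra|].
  apply NB_evp_self; auto; lra.
Qed.

Lemma eval_conv (W : nat -> ser) j : (j < n)%nat -> (forall k, (k < n)%nat -> NB n r (W k) M) ->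
  forall w, cvC (fun D => evp (2 * n) (G j) (pair_tuple n B W) D w) (evalf (2 * n) (G j) (pair_tuple n B W) w).
Proof.
  intros Hj HW. destruct (ratio_lt_1 R M); auto; [lra|].
  apply (evalf_spec (2 * n) n _ _ R r h M); auto; try lra. apply pair_in_ball; auto.
Qed.

Fixpoint picard (k : nat) : nat -> ser :=
  match k with
  | O => fun _ => szero
  | S k' => fun j => evalf (2 * n) (G j) (pair_tuple n B (picard k'))
  end.

Lemma picard_ball k : forall j, (j < n)%nat -> NB n r (picard k j) rho.
Proof.
  induction k as [|k IH]; intros j Hj; [eapply NB_weaken; [apply NB_zero|lra]|].
  assert (HW : forall i, (i < n)%nat -> NB n r (picard k i) M) by (intros; eapply NB_weaken; [apply IH; auto|lra]).
  apply (eval_self (picard k) _ j Hj HW). apply eval_conv; auto.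
Qed.

Lemma picard_conv k j : (j < n)%nat ->
  forall w, cvC (fun D => evp (2 * n) (G j) (pair_tuple n B (picard k)) D w) (picard (S k) j w).
Proof. intros Hj. apply eval_conv; auto. intros; eapply NB_weaken; [apply picard_ball; auto|lra]. Qed.

Lemma picard_step k : forall j, (j < n)%nat -> NB n r (ssub (picard (S k) j) (picard k j)) (rho * (1 / 2) ^ k).
Proof.
  induction k as [|k IH]; intros j Hj.
  - simpl picard at 2. rewrite ssub_szero. eapply NB_weaken; [apply picard_ball; auto|simpl; lra].
  - replace (rho * (1 / 2) ^ S k) with (rho * (1 / 2) ^ k / 2) by (simpl; field).
    apply (eval_half (picard (S k)) (picard k) (picard (S (S k))) (picard (S k))); auto.
    + apply Rmult_le_pos; [lra|apply pow_le; lra].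
    + intros i Hi. split; [|split]; [eapply NB_weaken; [apply picard_ball; auto|lra]..|apply IH; auto].
    + apply picard_conv; auto.
    + apply picard_conv; auto.
Qed.

Lemma picard_cauchy k t : forall j, (j < n)%nat ->
  NB n r (ssub (picard (k + t) j) (picard k j)) (2 * rho * (1 / 2) ^ k).
Proof.
  intros j Hj. apply NB_weaken with (rs (fun i => rho * (1 / 2) ^ i) (seq k t)).
  - induction t as [|t IH].
    + rewrite Nat.add_0_r, ssub_self. change (seq k 0) with (@nil nat). rewrite rs_nil. apply NB_zero.
    + rewrite (ssub_tele _ (picard (k + t) j)), seq_S, rs_app, Rplus_comm, rs_cons, rs_nil, Rplus_0_r.
      apply NB_add; [lra| |auto]. replace (k + S t)%nat with (S (k + t)) by lia. apply picard_step; auto.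
  - rewrite rs_scal. eapply Rle_trans; [apply Rmult_le_compat_l; [lra|apply geom_tail; lra]|].
    right. field.
Qed.

Lemma picard_fix : exists f : nat -> ser, (forall j, (j < n)%nat -> NB n r (f j) rho) /\
  (forall j, (j < n)%nat -> forall w, cvC (fun D => evp (2 * n) (G j) (pair_tuple n B f) D w) (f j w)).
Proof.
  set (f := fun j => serlim (fun k => picard k j)).
  assert (Hlim : forall j, (j < n)%nat -> (forall w, cvC (fun k => picard k j w) (f j w)) /\
            forall k, NB n r (ssub (f j) (picard k j)) (2 * rho * (1 / 2) ^ k)).
  { intros j Hj. apply NB_cauchy_limit; try lra. intros; apply picard_cauchy; auto. }
  assert (Hf : forall j, (j < n)%nat -> NB n r (f j) rho).
  { intros j Hj. apply NB_limit with (fun k => picard k j); [lra|apply Hlim; auto|].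
    intros; apply picard_ball; auto. }
  assert (HfM : forall i, (i < n)%nat -> NB n r (f i) M) by (intros; eapply NB_weaken; [apply Hf; auto|lra]).
  exists f. split; auto. intros j Hj.
  set (E := evalf (2 * n) (G j) (pair_tuple n B f)).
  (* E = G(B, f) is the limit of G(B, picard k) = picard (k+1), hence equals f j *)
  assert (HE : forall w, E w = f j w).
  { intros w. apply ssub_zero_eq. revert w. apply (NB_geom_zero n r _ (2 * rho) (1 / 2)); try lra. intros k.
    rewrite (ssub_tele _ (picard (S k) j)).
    replace (2 * rho * (1 / 2) ^ k) with (2 * rho * (1 / 2) ^ k / 2 + 2 * rho * (1 / 2) ^ S k) by (simpl; field).
    apply NB_add; [lra| |].
    - apply (eval_half f (picard k) (fun _ => E) (picard (S k))); auto.
      + apply Rmult_le_pos; [lra|apply pow_le; lra].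
      + intros i Hi. split; [|split]; [auto|eapply NB_weaken; [apply picard_ball; auto|lra]|apply Hlim; auto].
      + apply eval_conv; auto.
      + apply picard_conv; auto.
    - apply NB_ssub_sym; [lra|]. apply Hlim; auto. }
  intros w. rewrite <- HE. apply eval_conv; auto.
Qed.

(* Uniqueness of the fixed point in the M-ball: distances halve at each step. *)
Lemma fix_unique (W W' : nat -> ser) :
  (forall j, (j < n)%nat -> NB n r (W j) M /\ NB n r (W' j) M) ->
  (forall j, (j < n)%nat -> forall w, cvC (fun D => evp (2 * n) (G j) (pair_tuple n B W) D w) (W j w)) ->
  (forall j, (j < n)%nat -> forall w, cvC (fun D => evp (2 * n) (G j) (pair_tuple n B W') D w) (W' j w)) ->
  forall j w, (j < n)%nat -> W j w = W' j w.
Proof.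
  intros HW Hf Hf' j w Hj.
  assert (Hk : forall k i, (i < n)%nat -> NB n r (ssub (W i) (W' i)) (2 * M * (1 / 2) ^ k)).
  { induction k as [|k IH]; intros i Hi.
    - eapply NB_weaken; [apply NB_sub; [lra|apply HW|apply HW]; auto|simpl; lra].
    - replace (2 * M * (1 / 2) ^ S k) with (2 * M * (1 / 2) ^ k / 2) by (simpl; field).
      apply (eval_half W W' W W'); auto; [apply Rmult_le_pos; [lra|apply pow_le; lra]|].
      intros; split; [|split]; try apply HW; auto. }
  apply ssub_zero_eq. revert w. apply (NB_geom_zero n r _ (2 * M) (1 / 2)); try lra.
  intros k; apply Hk; auto.
Qed.

End Contraction.

(* ** Truncations

   tr K P keeps the terms of P of degree <= K.  Products of truncations are
   polynomials, whose evaluation is exactly multiplicative; the tails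
   P - tr K P are small in any smaller radius. *)

Definition tr K (P : ser) : ser := fun w => if Nat.leb (length w) K then P w else C0.

Lemma tr_zero K P q : (K < length q)%nat -> tr K P q = C0.
Proof. intros. unfold tr. destruct (Nat.leb_spec (length q) K); auto; lia. Qed.
Lemma tr_eq K P q : (length q <= K)%nat -> tr K P q = P q.
Proof. intros. unfold tr. destruct (Nat.leb_spec (length q) K); auto; lia. Qed.

Lemma evp_tr m P T K : evp m (tr K P) T K = evp m P T K.
Proof.
  sext. rewrite !evp_w. apply cs_ext_in; intros d Hd. apply in_seq in Hd.
  apply cs_ext_in; intros q Hq. apply In_words in Hq. rewrite tr_eq by lia. reflexivity.
Qed.

Lemma NB_tr m r P K B : 0 <= r -> NB m r P B -> NB m r (tr K P) B.
Proof.
  intros Hr [Hs H]. split; [intros w Hw; unfold tr; destruct (Nat.leb _ _); auto|].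
  intros N. eapply Rle_trans; [|apply (H N)]. apply rs_le; intro d.
  apply Rmult_le_compat_l; [apply pow_le; auto|]. apply rs_le; intro q.
  unfold tr. destruct (Nat.leb (length q) K); [lra|]. rewrite Cmod_C0; apply Cmod_ge0.
Qed.

Lemma NB_tr_tail m r s P K B : 0 < r -> 0 <= s < r -> NB m r P B ->
  NB m s (ssub P (tr K P)) (B * (s / r) / (1 - s / r) * (s / r) ^ K).
Proof.
  intros Hr Hs HP.
  assert (Hrho : 0 <= s / r < 1).
  { split; [apply Rmult_le_pos; [lra|left; apply Rinv_0_lt_compat; auto]|].
    apply Rmult_lt_reg_r with r; auto. unfold Rdiv. rewrite Rmult_assoc, Rinv_l by lra. lra. }
  assert (HB : 0 <= B) by (eapply NB_nonneg; [|exact HP]; lra).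
  split; [apply supp_sub; [apply HP|apply (NB_tr m r P K B); [lra|exact HP]]|].
  intros N. unfold pn.
  assert (Hd : forall d, s ^ d * blk m (ssub P (tr K P)) d <= if Nat.leb d K then 0 else B * (s / r) ^ d).
  { intros d. destruct (Nat.leb_spec d K).
    - right. unfold blk. rewrite rs_zero; [ring|]. intros q Hq. apply In_words in Hq.
      unfold ssub. rewrite tr_eq, Csub_diag by lia. apply Cmod_C0.
    - replace (blk m (ssub P (tr K P)) d) with (blk m P d).
      + rewrite Rmult_comm. apply (blk_geom m r P B d s); auto; lra.
      + apply rs_ext_in. intros q Hq. apply In_words in Hq. unfold ssub. rewrite tr_zero by lia.
        f_equal. Cring. }
  eapply Rle_trans; [apply rs_le; intro d; apply Hd|].
  assert (Hpos : 0 <= B * (s / r) / (1 - s / r) * (s / r) ^ K).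
  { apply Rmult_le_pos; [|apply pow_le; lra].
    apply Rmult_le_pos; [apply Rmult_le_pos; lra|left; apply Rinv_0_lt_compat; lra]. }
  destruct (le_lt_dec N K).
  - rewrite rs_zero; auto. intros d Hd'. apply in_seq in Hd'. destruct (Nat.leb_spec d K); auto; lia.
  - replace (S N) with (S K + (N - K))%nat by lia. rewrite seq_app, rs_app, rs_zero, Rplus_0_l.
    + simpl (0 + S K)%nat. rewrite (rs_ext_in _ (fun d => B * (s / r) ^ d)), rs_scal.
      * eapply Rle_trans; [apply Rmult_le_compat_l; [auto|apply geom_tail; auto]|].
        right. simpl. field. lra.
      * intros d Hd'. apply in_seq in Hd'. destruct (Nat.leb_spec d K); auto; lia.
    + intros d Hd'. apply in_seq in Hd'. destruct (Nat.leb_spec d K); auto; lia.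
Qed.

Lemma smul_csum_w {X Y} (f : X -> ser) l (g : Y -> ser) l' w :
  ser_mul (csum f l) (csum g l') w = cs (fun x => cs (fun y => ser_mul (f x) (g y) w) l') l.
Proof. rewrite smul_csum_l. unfold csum at 1. apply cs_ext; intro x. rewrite smul_csum_r. reflexivity. Qed.

Lemma evp_mul_poly m P Q T K :
  ser_mul (evp m P T K) (evp m Q T K) = evp m (ser_mul (tr K P) (tr K Q)) T (K + K).
Proof.
  sext. set (psi := fun u v => Cmul (Cmul (tr K P u) (tr K Q v)) (mono (u ++ v) T w)).
  set (g := fun i j => cs (fun u => cs (fun v => psi u v) (words m j)) (words m i)).
  transitivity (cs (fun i => cs (fun j => g i j) (seq 0 (S K))) (seq 0 (S K))).
  - unfold evp at 1 2. rewrite smul_csum_w. apply cs_ext_in; intros i Hi. apply in_seq in Hi.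
    apply cs_ext_in; intros j Hj. apply in_seq in Hj.
    unfold eterm. rewrite smul_csum_w. unfold g. apply cs_ext_in; intros u Hu. apply In_words in Hu.
    apply cs_ext_in; intros v Hv. apply In_words in Hv.
    rewrite smul_scal_l, smul_scal_r, <- mono_app. unfold sscal, psi. rewrite !tr_eq by lia. Cring.
  - rewrite evp_w.
    transitivity (cs (fun d => cs (fun i => g i (d - i)%nat) (seq 0 (S d))) (seq 0 (S (K + K)))).
    + rewrite cs_reindex. symmetry. rewrite (cs_trim _ K (K + K)); [|lia|].
      * apply cs_ext_in; intros i Hi. apply in_seq in Hi. apply cs_trim; [lia|].
        intros j Hj. unfold g. apply cs_zero; intros u Hu. apply cs_zero; intros v Hv. apply In_words in Hv.
        unfold psi. rewrite (tr_zero K Q v) by lia. Cring.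
      * intros i Hi. apply cs_zero; intros j Hj. unfold g. apply cs_zero; intros u Hu. apply In_words in Hu.
        apply cs_zero; intros v Hv. unfold psi. rewrite (tr_zero K P u) by lia. Cring.
    + apply cs_ext; intro d. unfold g. rewrite <- cs_split.
      apply cs_ext_in; intros q Hq. rewrite ser_mul_cs, <- cs_scal_r. apply cs_ext; intro k.
      unfold psi. rewrite firstn_skipn. reflexivity.
Qed.

(* ** Substitution of a tuple U of A-norm < a

   Evaluation P |-> P(U) is defined on series
   of finite a-norm, contracts norms (||P(U)||_A <= ||P||_a'), and is an algebra
   homomorphism; consequently it commutes with evaluation: (G(T))(U) = G(T(U)). *)

Section Substitution.
Variables (n : nat) (A a a' : R) (U : nat -> ser).
Hypotheses (HA : 0 < A) (Ha' : 0 < a') (Haa : a' < a) (HU : forall i, (i < n)%nat -> NB n A (U i) a').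

Definition ev (P : ser) : ser := evalf n P U.
Definition inSa (P : ser) : Prop := exists B, NB n a P B.

Lemma ev_conv P : inSa P -> forall w, cvC (fun D => evp n P U D w) (ev P w).
Proof. intros [B HB]. apply (evalf_spec n n P U a A B a'); auto; lra. Qed.

Lemma ev_eq P V : inSa P -> (forall w, cvC (fun D => evp n P U D w) (V w)) -> ev P = V.
Proof. intros HP HV. sext. eapply cvC_unique; [apply ev_conv; auto|apply HV]. Qed.

Lemma NB_a_a' P B : NB n a P B -> NB n a' P B.
Proof. apply NB_rad; lra. Qed.

Lemma ev_bound P B : inSa P -> NB n a' P B -> NB n A (ev P) B.
Proof.
  intros HP HB. apply NB_limit with (fun D => evp n P U D); [lra|apply ev_conv; auto|].
  intros D. eapply NB_weaken; [apply (NB_evp n n A P U a' D); [lra|auto]|].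
  destruct HB as [_ HB]. eapply Rle_trans; [|apply (HB D)]. right. apply rs_ext; intro; ring.
Qed.

Lemma inSa_add P Q : inSa P -> inSa Q -> inSa (sadd P Q).
Proof. intros [B1 H1] [B2 H2]. exists (B1 + B2). apply NB_add; auto; lra. Qed.
Lemma inSa_sub P Q : inSa P -> inSa Q -> inSa (ssub P Q).
Proof. intros [B1 H1] [B2 H2]. exists (B1 + B2). apply NB_sub; auto; lra. Qed.
Lemma inSa_mul P Q : inSa P -> inSa Q -> inSa (ser_mul P Q).
Proof. intros [B1 H1] [B2 H2]. exists (B1 * B2). apply NB_mul; auto; lra. Qed.
Lemma inSa_scal c P : inSa P -> inSa (sscal c P).
Proof. intros [B1 H1]. exists (Cmod c * B1). apply NB_scal; auto; lra. Qed.
Lemma inSa_tr P K : inSa P -> inSa (tr K P).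
Proof. intros [B1 H1]. exists B1. apply NB_tr; auto; lra. Qed.
Lemma inSa_one : inSa ser_one.
Proof. exists 1. apply NB_one; lra. Qed.
Lemma inSa_var i : (i < n)%nat -> inSa (svar i).
Proof. intros. exists a. apply NB_var; auto; lra. Qed.
Lemma inSa_csum {X} (f : X -> ser) l : (forall x, In x l -> inSa (f x)) -> inSa (csum f l).
Proof.
  induction l as [|x l IH]; intros H; [rewrite csum_nil; exists 0; apply NB_zero|].
  rewrite csum_cons. apply inSa_add; [apply H; simpl; auto|]. apply IH; intros; apply H; simpl; auto.
Qed.
Lemma inSa_mono q T : (forall x, In x q -> inSa (T x)) -> inSa (mono q T).
Proof.
  induction q as [|x q IH]; intros H; [apply inSa_one|]. rewrite mono_cons.
  apply inSa_mul; [apply H; simpl; auto|]. apply IH; intros; apply H; simpl; auto.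
Qed.

Lemma ev_add P Q : inSa P -> inSa Q -> ev (sadd P Q) = sadd (ev P) (ev Q).
Proof.
  intros HP HQ. apply ev_eq; [apply inSa_add; auto|]. intros w.
  apply (cvC_ext (fun D => Cadd (evp n P U D w) (evp n Q U D w))); [intros D; rewrite evp_add; reflexivity|].
  apply cvC_plus; apply ev_conv; auto.
Qed.
Lemma ev_sub P Q : inSa P -> inSa Q -> ev (ssub P Q) = ssub (ev P) (ev Q).
Proof.
  intros HP HQ. apply ev_eq; [apply inSa_sub; auto|]. intros w.
  apply (cvC_ext (fun D => Csub (evp n P U D w) (evp n Q U D w))); [intros D; rewrite evp_sub; reflexivity|].
  apply cvC_sub; apply ev_conv; auto.
Qed.
Lemma ev_scal c P : inSa P -> ev (sscal c P) = sscal c (ev P).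
Proof.
  intros HP. apply ev_eq; [apply inSa_scal; auto|]. intros w.
  apply (cvC_ext (fun D => Cmul c (evp n P U D w))); [intros D; rewrite evp_scal; reflexivity|].
  apply cvC_scal; apply ev_conv; auto.
Qed.
Lemma ev_zero : ev szero = szero.
Proof.
  apply ev_eq; [exists 0; apply NB_zero|]. intros w. apply cvC_const with 0%nat. intros D _.
  rewrite evp_w. apply cs_zero; intros; apply cs_zero; intros. apply Cmul_0_l.
Qed.
Lemma ev_csum {X} (f : X -> ser) l : (forall x, In x l -> inSa (f x)) ->
  ev (csum f l) = csum (fun x => ev (f x)) l.
Proof.
  induction l as [|x l IH]; intros H; [rewrite !csum_nil; apply ev_zero|].
  rewrite !csum_cons, ev_add, IH; auto; [intros; apply H; simpl; auto|apply H; simpl; auto|].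
  apply inSa_csum. intros; apply H; simpl; auto.
Qed.

Lemma ev_stable P K : inSa P -> (forall q, (K < length q)%nat -> P q = C0) -> ev P = evp n P U K.
Proof.
  intros HP HK. apply ev_eq; auto. intros w. apply cvC_const with K. intros D HD.
  rewrite (evp_stable n P U K D); auto.
Qed.

Lemma ev_one : ev ser_one = ser_one.
Proof.
  rewrite (ev_stable _ 0); [|apply inSa_one|intros q Hq; destruct q; simpl in Hq; [lia|reflexivity]].
  sext. rewrite evp_w. unfold cs; simpl. rewrite mono_nil, Cmul_1_l, !Cadd_0_r. reflexivity.
Qed.

Lemma ev_var i : (i < n)%nat -> ev (svar i) = U i.
Proof.
  intros Hi. rewrite (ev_stable _ 1); [apply evp_svar; auto|apply inSa_var; auto|].
  intros q Hq. unfold svar. destruct (list_eq_dec Nat.eq_dec q [i]); auto. subst; simpl in Hq; lia.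
Qed.

(* Multiplicativity on truncations, where everything is polynomial. *)
Lemma ev_mul_trunc P Q K : inSa P -> inSa Q ->
  ev (ser_mul (tr K P) (tr K Q)) = ser_mul (ev (tr K P)) (ev (tr K Q)).
Proof.
  intros HP HQ.
  rewrite (ev_stable (tr K P) K), (ev_stable (tr K Q) K), (ev_stable _ (K + K));
    try (apply inSa_tr; auto); try (intros; apply tr_zero; auto).
  - rewrite !evp_tr. symmetry. apply evp_mul_poly.
  - apply inSa_mul; apply inSa_tr; auto.
  - intros q Hq. rewrite ser_mul_cs. apply cs_zero. intros k Hk. apply in_seq in Hk.
    destruct (le_lt_dec k K).
    + rewrite (tr_zero K Q); [apply Cmul_0_r|]. rewrite length_skipn. lia.
    + rewrite (tr_zero K P); [apply Cmul_0_l|]. rewrite firstn_length_le; lia.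
Qed.

Lemma ev_mul_defect P Q K : inSa P -> inSa Q ->
  ssub (ev (ser_mul P Q)) (ser_mul (ev P) (ev Q)) =
  sadd (ev (sadd (ser_mul (ssub P (tr K P)) Q) (ser_mul (tr K P) (ssub Q (tr K Q)))))
       (sadd (ser_mul (ev (tr K P)) (ev (ssub (tr K Q) Q))) (ser_mul (ev (ssub (tr K P) P)) (ev Q))).
Proof.
  intros HP HQ.
  replace (sadd (ser_mul (ssub P (tr K P)) Q) (ser_mul (tr K P) (ssub Q (tr K Q))))
    with (ssub (ser_mul P Q) (ser_mul (tr K P) (tr K Q)))
    by (rewrite smul_sub_l, smul_sub_r; sext; unfold ssub, sadd; Cring).
  rewrite ev_sub, ev_mul_trunc, !ev_sub; try apply inSa_mul; try apply inSa_tr; auto.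
  rewrite !smul_sub_r, !smul_sub_l. sext. unfold ssub, sadd. Cring.
Qed.

Lemma ev_mul P Q : inSa P -> inSa Q -> ev (ser_mul P Q) = ser_mul (ev P) (ev Q).
Proof.
  intros HP HQ. destruct HP as [B1 H1], HQ as [B2 H2].
  assert (HB1 : 0 <= B1) by (eapply NB_nonneg; [|exact H1]; lra).
  assert (HB2 : 0 <= B2) by (eapply NB_nonneg; [|exact H2]; lra).
  set (B := B1 + B2). assert (HB : 0 <= B) by (unfold B; lra).
  assert (HP : NB n a P B) by (eapply NB_weaken; [exact H1|unfold B; lra]).
  assert (HQ : NB n a Q B) by (eapply NB_weaken; [exact H2|unfold B; lra]).
  assert (HPa : inSa P) by (exists B; auto). assert (HQa : inSa Q) by (exists B; auto).
  set (rho := a' / a).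
  assert (Hrho : 0 <= rho < 1).
  { unfold rho. split; [apply Rmult_le_pos; [lra|left; apply Rinv_0_lt_compat; lra]|].
    apply Rmult_lt_reg_r with a; [lra|]. unfold Rdiv. rewrite Rmult_assoc, Rinv_l by lra. lra. }
  set (c := B * rho / (1 - rho)).
  assert (Hc : 0 <= c) by (apply Rmult_le_pos; [apply Rmult_le_pos; lra|left; apply Rinv_0_lt_compat; lra]).
  assert (Htail : forall S K, NB n a S B -> NB n a' (ssub S (tr K S)) (c * rho ^ K))
    by (intros; apply NB_tr_tail; auto; lra).
  assert (Htail' : forall S K, NB n a S B -> NB n a' (ssub (tr K S) S) (c * rho ^ K))
    by (intros; apply NB_ssub_sym; [lra|]; apply Htail; auto).
  assert (HtrB : forall S K, NB n a S B -> NB n a' (tr K S) B) by (intros; apply NB_a_a', NB_tr; auto; lra).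
  sext. apply ssub_zero_eq. revert w. apply (NB_geom_zero n A _ (4 * B * c) rho); auto.
  { apply Rmult_le_pos; [lra|auto]. }
  intros K. rewrite (ev_mul_defect P Q K) by auto.
  replace (4 * B * c * rho ^ K) with
    ((c * rho ^ K * B + B * (c * rho ^ K)) + (B * (c * rho ^ K) + c * rho ^ K * B)) by ring.
  apply NB_add; [lra| |apply NB_add; [lra| |]].
  - apply ev_bound; [apply inSa_add; apply inSa_mul; try apply inSa_sub; try apply inSa_tr; auto|].
    apply NB_add; [lra| |]; apply NB_mul; auto; try lra; apply NB_a_a'; auto.
  - apply NB_mul; [lra| |]; apply ev_bound; try apply inSa_tr; try apply inSa_sub; try apply inSa_tr; auto.
  - apply NB_mul; [lra| |]; apply ev_bound; try apply inSa_sub; try apply inSa_tr; auto.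
    apply NB_a_a'; auto.
Qed.

Lemma ev_mono q T : (forall x, In x q -> inSa (T x)) -> ev (mono q T) = mono q (fun x => ev (T x)).
Proof.
  induction q as [|x q IH]; intros H; [rewrite !mono_nil; apply ev_one|].
  rewrite !mono_cons, ev_mul, IH; auto; [intros; apply H; simpl; auto|apply H; simpl; auto|].
  apply inSa_mono; intros; apply H; simpl; auto.
Qed.

Lemma ev_evp m G T D : (forall x, (x < m)%nat -> inSa (T x)) ->
  ev (evp m G T D) = evp m G (fun x => ev (T x)) D.
Proof.
  intros HT.
  assert (Hq : forall d u, In u (words m d) -> inSa (sscal (G u) (mono u T))).
  { intros d u Hu. apply In_words in Hu. destruct Hu as [_ Hv]. apply inSa_scal, inSa_mono.
    intros x Hx. apply HT. eapply Forall_forall in Hv; eauto. }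
  unfold evp. rewrite ev_csum; [|intros d _; apply inSa_csum; intros u Hu; eapply Hq; eauto].
  apply csum_ext_in. intros d _. unfold eterm. rewrite ev_csum; [|intros u Hu; eapply Hq; eauto].
  apply csum_ext_in. intros u Hu.
  assert (Hu' : forall x, In x u -> inSa (T x)).
  { apply In_words in Hu. destruct Hu as [_ Hv]. intros x Hx. apply HT. eapply Forall_forall in Hv; eauto. }
  rewrite ev_scal, ev_mono by (auto using inSa_mono). reflexivity.
Qed.

Lemma ev_compose m G T R h M V : NB m R G h -> 0 <= M < R -> (forall x, (x < m)%nat -> NB n a (T x) M) ->
  (forall w, cvC (fun D => evp m G T D w) (V w)) ->
  forall w, cvC (fun D => evp m G (fun x => ev (T x)) D w) (ev V w).
Proof.
  intros HG HM HT HV.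
  destruct (evalf_spec m n G T R a h M) as [Hcv Htail]; try lra; auto.
  assert (E : evalf m G T = V) by (sext; eapply cvC_unique; eauto). rewrite E in Htail.
  set (rho := M / R).
  assert (Hrho : 0 <= rho < 1).
  { unfold rho. split; [apply Rmult_le_pos; [lra|left; apply Rinv_0_lt_compat; lra]|].
    apply Rmult_lt_reg_r with R; [lra|]. unfold Rdiv. rewrite Rmult_assoc, Rinv_l by lra. lra. }
  assert (Hh : 0 <= h) by (eapply NB_nonneg; [|exact HG]; lra).
  set (c := h * rho / (1 - rho)).
  assert (Hc : 0 <= c) by (apply Rmult_le_pos; [apply Rmult_le_pos; lra|left; apply Rinv_0_lt_compat; lra]).
  assert (HTa : forall x, (x < m)%nat -> inSa (T x)) by (intros x Hx; exists M; auto).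
  assert (Hevp : forall D, inSa (evp m G T D)) by (intros D; eexists; apply NB_evp; eauto; lra).
  assert (HVa : inSa V).
  { destruct (Hevp 0%nat) as [B0 HB0]. exists (c * rho ^ 0 + B0).
    replace V with (sadd (ssub V (evp m G T 0)) (evp m G T 0)) by (sext; unfold sadd, ssub; Cring).
    apply NB_add; auto; lra. }
  intros w. apply (cvC_geom _ _ (c / A ^ length w) rho); auto.
  { apply Rmult_le_pos; [auto|left; apply Rinv_0_lt_compat, pow_lt; lra]. }
  intros D. rewrite <- ev_evp, Cmod_sub_sym by auto.
  assert (Hd : NB n A (ssub (ev V) (ev (evp m G T D))) (c * rho ^ D)).
  { rewrite <- ev_sub by auto. apply ev_bound; [apply inSa_sub; auto|]. apply NB_a_a', Htail. }
  eapply Rle_trans; [apply (coef_small n A _ _ w HA Hd)|]. right. unfold Rdiv. ring.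
Qed.

End Substitution.

(* ** Reduction of F(U,V) = 0 to the fixed-point problem V = H(U,V) *)

Lemma dq0_eq n j q : dq0 n j q = if list_eq_dec Nat.eq_dec q [(n + j)%nat] then C1 else C0.
Proof.
  destruct (list_eq_dec Nat.eq_dec q [(n + j)%nat]) as [E|E].
  - subst. unfold dq0, fdq. simpl. rewrite Nat.eqb_refl. simpl. apply C_ext; simpl; ring.
  - unfold dq0. fold (cs (fun p => Cmul (ev0 (fst p)) (ev0 (snd p))) (fdq n j q)).
    apply cs_zero. intros p Hp. unfold fdq in Hp. apply in_flat_map in Hp. destruct Hp as [k [Hk Hp]].
    apply in_seq in Hk. destruct (Nat.eqb_spec (nth k q 0%nat) (n + j)); [|destruct Hp].
    destruct Hp as [<-|[]]. cbn [fst snd].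
    destruct (firstn k q) eqn:E1; [|apply Cmul_0_l].
    destruct (skipn (S k) q) eqn:E2; [|apply Cmul_0_r].
    exfalso. apply E. assert (Hk0 : k = 0%nat).
    { destruct k; auto. apply (f_equal (@length nat)) in E1. rewrite firstn_length_le in E1 by lia.
      simpl in E1. lia. }
    subst k. apply (f_equal (@length nat)) in E2. rewrite length_skipn in E2. simpl in E2.
    destruct q as [|x [|y q]]; simpl in *; try lia. subst; reflexivity.
Qed.

Lemma jac_coef n F Q : jac0_is n F Q -> forall i j, (i < n)%nat -> (j < n)%nat -> Q i j = F i [(n + j)%nat].
Proof.
  intros H i j Hi Hj. specialize (H i j Hi Hj). apply Cinfinite_sum_cvC in H.
  set (s := fun d => cs (fun q => Cmul (F i q) (dq0 n j q)) (words (2 * n) d)) in H.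
  assert (Hs : forall d, s d = if Nat.eqb d 1 then F i [(n + j)%nat] else C0).
  { intros d. unfold s. destruct (Nat.eqb_spec d 1).
    - subst. rewrite words_1, cs_map, (cs_single _ (n + j) (2 * n)); [| lia |].
      + rewrite dq0_eq. destruct (list_eq_dec _ _ _); [|congruence]. apply Cmul_1_r.
      + intros x Hx. rewrite dq0_eq. destruct (list_eq_dec _ _ _) as [e|]; [inversion e; congruence|].
        apply Cmul_0_r.
    - apply cs_zero. intros q Hq. apply In_words in Hq. rewrite dq0_eq.
      destruct (list_eq_dec _ _ _); [subst; simpl in Hq; lia|]. apply Cmul_0_r. }
  eapply cvC_unique; [exact H|]. apply cvC_const with 1%nat. intros D HD.
  change (cs s (seq 0 (S D)) = F i [(n + j)%nat]).
  rewrite (cs_trim s 1 D) by (auto; intros k Hk; rewrite Hs; destruct (Nat.eqb_spec k 1); auto; lia).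
  unfold cs; simpl. rewrite (Hs 0%nat), (Hs 1%nat). simpl. rewrite Cadd_0_l, Cadd_0_r. reflexivity.
Qed.

Section Reduction.
Variables (n : nat) (F : nat -> ser) (Q Qi : nat -> nat -> C).
Hypotheses (HQ : forall i j, (i < n)%nat -> (j < n)%nat -> Q i j = F i [(n + j)%nat])
  (Hinv : forall i j, (i < n)%nat -> (j < n)%nat ->
     Cmatmul n Q Qi i j = Cid i j /\ Cmatmul n Qi Q i j = Cid i j).

Definition Hser j := ssub (svar (n + j)) (csum (fun k => sscal (Qi j k) (F k)) (seq 0 n)).

Lemma Hser_nil j : (forall k, (k < n)%nat -> F k [] = C0) -> Hser j [] = C0.
Proof.
  intros H0. unfold Hser, ssub, csum, svar. simpl. rewrite cs_zero; [apply C_ext; simpl; ring|].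
  intros k Hk. apply in_seq in Hk. unfold sscal. rewrite H0 by lia. apply Cmul_0_r.
Qed.

(* H has no Y-linear term since Qi Q = 1. *)
Lemma Hser_lin j l : (j < n)%nat -> (l < n)%nat -> Hser j [(n + l)%nat] = C0.
Proof.
  intros Hj Hl. unfold Hser, ssub, csum, sscal.
  rewrite (cs_ext_in _ (fun k => Cmul (Qi j k) (Q k l))) by (intros k Hk; apply in_seq in Hk; rewrite HQ by lia; reflexivity).
  change (cs (fun k => Cmul (Qi j k) (Q k l)) (seq 0 n)) with (Cmatmul n Qi Q j l).
  rewrite (proj2 (Hinv j l Hj Hl)). unfold svar, Cid.
  destruct (Nat.eqb_spec j l) as [Ejl|Ejl]; destruct (list_eq_dec Nat.eq_dec _ _) as [E|E];
    try (inversion E; lia); subst; try congruence; apply Csub_diag.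
Qed.

Lemma NB_Hser A L c j : 0 <= A -> (j < n)%nat -> (forall k, (k < n)%nat -> NB (2 * n) A (F k) L) ->
  (forall k, (k < n)%nat -> Cmod (Qi j k) <= c) -> 0 <= L ->
  NB (2 * n) A (Hser j) (A + INR n * (c * L)).
Proof.
  intros HA Hj HF Hc HL. unfold Hser. apply NB_sub; auto; [apply NB_var; auto; lia|].
  eapply NB_weaken; [apply NB_csum; auto; intros k Hk; apply in_seq in Hk; apply NB_scal; auto; apply HF; lia|].
  rewrite <- (length_seq n 0) at 2. apply rs_le_length. intros k Hk. apply in_seq in Hk.
  apply Rmult_le_compat_r; auto. apply Hc; lia.
Qed.

Lemma Hser_eval_conv T (Phi : nat -> ser) j w : (j < n)%nat ->
  (forall k, (k < n)%nat -> forall w, cvC (fun D => evp (2 * n) (F k) T D w) (Phi k w)) ->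
  cvC (fun D => evp (2 * n) (Hser j) T D w)
      (Csub (T (n + j)%nat w) (cs (fun k => Cmul (Qi j k) (Phi k w)) (seq 0 n))).
Proof.
  intros Hj HF.
  apply (cvC_eventually_ext (fun D => Csub (T (n + j)%nat w)
            (cs (fun k => Cmul (Qi j k) (evp (2 * n) (F k) T D w)) (seq 0 n))) _ _ 1).
  - intros D HD. unfold Hser. rewrite evp_sub, evp_svar, evp_csum by lia.
    unfold ssub, csum. f_equal. apply cs_ext; intro k. rewrite evp_scal. reflexivity.
  - apply cvC_sub; [apply cvC_const with 0%nat; auto|]. apply cvC_cs. intros k Hk. apply in_seq in Hk.
    apply cvC_scal, HF. lia.
Qed.

Lemma F_to_H B V j : (j < n)%nat ->
  (forall k, (k < n)%nat -> eval_is (2 * n) (F k) (pair_tuple n B V) (fun _ => C0)) ->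
  forall w, cvC (fun D => evp (2 * n) (Hser j) (pair_tuple n B V) D w) (V j w).
Proof.
  intros Hj HF w.
  eapply cvC_ext; [intros; reflexivity|].
  replace (V j w) with (Csub (pair_tuple n B V (n + j)%nat w) (cs (fun k => Cmul (Qi j k) C0) (seq 0 n))).
  - apply (Hser_eval_conv _ (fun _ _ => C0)); auto. intros k Hk. apply eval_is_iff, HF; auto.
  - rewrite pair_tuple_ge by lia. replace (n + j - n)%nat with j by lia.
    rewrite cs_zero; [apply C_ext; simpl; ring|]. intros; apply Cmul_0_r.
Qed.

(* Conversely a fixed point V = H(B,V) solves F(B,V) = 0, as soon as F(B,V) converges. *)
Lemma H_to_F B V (Phi : nat -> ser) :
  (forall j, (j < n)%nat -> forall w, cvC (fun D => evp (2 * n) (Hser j) (pair_tuple n B V) D w) (V j w)) ->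
  (forall k, (k < n)%nat -> forall w, cvC (fun D => evp (2 * n) (F k) (pair_tuple n B V) D w) (Phi k w)) ->
  forall k, (k < n)%nat -> eval_is (2 * n) (F k) (pair_tuple n B V) (fun _ => C0).
Proof.
  intros HH HP k Hk. apply eval_is_iff. intros w.
  assert (Hz : forall j, (j < n)%nat -> cs (fun l => Cmul (Qi j l) (Phi l w)) (seq 0 n) = C0).
  { intros j Hj. pose proof (cvC_unique _ _ _ (Hser_eval_conv _ Phi j w Hj HP) (HH j Hj w)) as E.
    rewrite pair_tuple_ge in E by lia. replace (n + j - n)%nat with j in E by lia.
    replace (cs (fun l => Cmul (Qi j l) (Phi l w)) (seq 0 n))
      with (Csub (V j w) (Csub (V j w) (cs (fun l => Cmul (Qi j l) (Phi l w)) (seq 0 n)))) by Cring.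
    rewrite E. apply Csub_diag. }
  (* hence Phi = Q Qi Phi = 0 *)
  assert (HPk : Phi k w = C0).
  { transitivity (cs (fun j => Cmul (Q k j) (cs (fun l => Cmul (Qi j l) (Phi l w)) (seq 0 n))) (seq 0 n)).
    - rewrite (cs_ext _ (fun j => cs (fun l => Cmul (Cmul (Q k j) (Qi j l)) (Phi l w)) (seq 0 n)))
        by (intros j; rewrite <- cs_scal_l; apply cs_ext; intro; apply Cmul_assoc).
      rewrite cs_swap, (cs_ext_in _ (fun l => Cmul (Cid k l) (Phi l w))).
      + unfold Cid. rewrite (cs_single _ k n Hk), Nat.eqb_refl; [symmetry; apply Cmul_1_l|].
        intros x Hx. destruct (Nat.eqb_spec k x); [congruence|]. apply Cmul_0_l.
      + intros l Hl. apply in_seq in Hl. rewrite cs_scal_r. f_equal. apply (proj1 (Hinv k l Hk ltac:(lia))).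
    - apply cs_zero. intros j Hj. apply in_seq in Hj. rewrite Hz by lia. apply Cmul_0_r. }
  rewrite <- HPk. apply HP; auto.
Qed.

End Reduction.

Lemma implicit_fixed_point n A h a M rho (G : nat -> ser) :
  0 < A -> 0 < a <= M -> 0 <= rho <= M -> 2 * M / A < 1 ->
  (forall j, (j < n)%nat -> NB (2 * n) A (G j) h) ->
  (forall j, (j < n)%nat -> G j [] = C0) ->
  (forall j k, (j < n)%nat -> (k < n)%nat -> G j [(n + k)%nat] = C0) ->
  lip_const A h M <= 1 / 2 -> h / A * a + h * ((M / A) ^ 2 / (1 - M / A)) <= rho ->
  exists f : nat -> ser, (forall j, (j < n)%nat -> NB n a (f j) rho) /\
    forall (U : nat -> ser) a', 0 < a' < a -> (forall i, (i < n)%nat -> NB n A (U i) a') ->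
      exists V : nat -> ser,
        (forall j, (j < n)%nat -> NB n A (V j) rho) /\
        (forall j, (j < n)%nat -> forall w, cvC (fun D => evp (2 * n) (G j) (pair_tuple n U V) D w) (V j w)) /\
        (forall j, (j < n)%nat -> forall w, cvC (fun D => evp n (f j) U D w) (V j w)) /\
        (forall V', (forall j, (j < n)%nat -> NB n A (V' j) M) ->
           (forall j, (j < n)%nat -> forall w, cvC (fun D => evp (2 * n) (G j) (pair_tuple n U V') D w) (V' j w)) ->
           forall j w, (j < n)%nat -> V' j w = V j w).
Proof.
  intros HA Ha Hrho Hs HG HG0 HG1 Hlip Hself.
  assert (HMA : M < A) by (apply (ratio_lt_1 A M); auto; lra).
  (* the formal solution, in the variables X_i = svar i *)
  destruct (picard_fix n a A h a M rho G svar) as [f [Hf Hfix]]; auto; try lra.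
  { intros i Hi. apply NB_var; auto; lra. }
  exists f. split; auto. intros U a' Ha' HU.
  assert (HfSa : forall j, (j < n)%nat -> inSa n a (f j)) by (intros j Hj; exists rho; auto).
  set (V := fun j => ev n U (f j)). exists V.
  assert (HVb : forall j, (j < n)%nat -> NB n A (V j) rho).
  { intros j Hj. apply (ev_bound n A a a' U); auto; try lra. apply NB_rad with a; [lra|auto]. }
  (* substituting U in f = G(X, f) gives V = G(U, V) *)
  assert (HVfix : forall j, (j < n)%nat ->
            forall w, cvC (fun D => evp (2 * n) (G j) (pair_tuple n U V) D w) (V j w)).
  { intros j Hj w.
    assert (E : forall D, evp (2 * n) (G j) (fun x => ev n U (pair_tuple n svar f x)) D =
                          evp (2 * n) (G j) (pair_tuple n U V) D).
    { intros D. apply evp_ext_T. intros x Hx. destruct (Nat.ltb_spec x n).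
      - rewrite !pair_tuple_lt by auto. apply (ev_var n A a a' U); auto; lra.
      - rewrite !pair_tuple_ge by auto. reflexivity. }
    apply (cvC_ext (fun D => evp (2 * n) (G j) (fun x => ev n U (pair_tuple n svar f x)) D w));
      [intros D; rewrite E; reflexivity|].
    apply (ev_compose n A a a' U HA ltac:(lra) ltac:(lra) HU (2 * n) (G j) (pair_tuple n svar f) A h M (f j));
      auto; try lra.
    intros x Hx. apply NB_pair_tuple; auto; intros i Hi; eapply NB_weaken;
      [apply NB_var; auto; lra|lra|apply Hf; auto|lra]. }
  split; [|split; [|split]]; auto.
  - intros j Hj. apply (ev_conv n A a a' U); auto; lra.
  - intros V' HV' HV'fix j w Hj.
    apply (fix_unique n A A h a M G U); auto; try lra.
    + intros i Hi. eapply NB_weaken; [apply HU; auto|lra].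
    + intros i Hi. split; auto. eapply NB_weaken; [apply HVb; auto|lra].
Qed.

(* With C = 2h/A + 1 and M = 2Ca, the contraction conditions hold as soon as
   8Ca <= A and 16hCa <= A^2. *)
Lemma contraction_conditions A h C a : 1 < A -> 0 < h -> C = 2 * h / A + 1 -> 0 < a ->
  8 * C * a <= A -> 16 * h * C * a <= A ^ 2 ->
  2 * (2 * C * a) / A < 1 /\ lip_const A h (2 * C * a) <= 1 / 2 /\
  h / A * a + h * ((2 * C * a / A) ^ 2 / (1 - 2 * C * a / A)) <= C * a.
Proof.
  intros HA Hh HC Ha H1 H2.
  assert (HC1 : 1 <= C) by (rewrite HC; assert (0 <= 2 * h / A) by (apply Rmult_le_pos; [lra|left; apply Rinv_0_lt_compat; lra]); lra).
  set (t := C * a). assert (Ht : 0 < t) by (unfold t; nra).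
  assert (H1' : 8 * t <= A) by (unfold t; lra).
  assert (H2' : 16 * h * t <= A * A) by (unfold t; simpl in H2; nra).
  split; [|split].
  - replace (2 * (2 * C * a) / A) with (4 * t / A) by (unfold t; field; lra).
    apply Rmult_lt_reg_r with A; [lra|]. unfold Rdiv. rewrite Rmult_assoc, Rinv_l by lra. lra.
  - unfold lip_const.
    replace (h / A * (2 * (2 * C * a) / A / (1 - 2 * (2 * C * a) / A))) with (4 * h * t / (A * (A - 4 * t)))
      by (unfold t; field; split; lra).
    assert (0 < A * (A - 4 * t)) by (apply Rmult_lt_0_compat; lra).
    apply Rmult_le_reg_r with (A * (A - 4 * t)); auto. unfold Rdiv. rewrite Rmult_assoc, Rinv_l by lra. nra.
  - replace (h / A * a) with ((C - 1) / 2 * a) by (rewrite HC; field; lra).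
    replace (h * ((2 * C * a / A) ^ 2 / (1 - 2 * C * a / A))) with (4 * h * t * t / (A * (A - 2 * t)))
      by (unfold t; field; split; lra).
    assert (0 < A * (A - 2 * t)) by (apply Rmult_lt_0_compat; lra).
    assert (4 * h * t * t / (A * (A - 2 * t)) <= t / 2).
    { assert (K : 8 * h * t <= A * (A - 2 * t)) by nra.
      apply Rmult_le_reg_r with (A * (A - 2 * t)); auto.
      replace (4 * h * t * t / (A * (A - 2 * t)) * (A * (A - 2 * t))) with (4 * h * t * t) by (field; lra).
      nra. }
    assert ((C - 1) / 2 * a <= t / 2) by (unfold t; nra). lra.
Qed.

Lemma small_radius A h C : 1 < A -> 0 < h -> 1 <= C ->
  exists a0, 0 < a0 < A /\ forall a, 0 < a < a0 -> 8 * C * a <= A /\ 16 * h * C * a <= A ^ 2.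
Proof.
  intros HA Hh HC. exists (Rmin (A / (8 * C)) (A ^ 2 / (16 * h * C))).
  pose proof (Rmin_l (A / (8 * C)) (A ^ 2 / (16 * h * C))) as H1.
  pose proof (Rmin_r (A / (8 * C)) (A ^ 2 / (16 * h * C))) as H2.
  split; [split|].
  - apply Rmin_glb_lt; apply Rdiv_lt_0_compat; nra.
  - eapply Rle_lt_trans; [exact H1|]. apply Rmult_lt_reg_r with (8 * C); [lra|].
    unfold Rdiv. rewrite Rmult_assoc, Rinv_l by lra. nra.
  - intros a [Ha Ha']. split.
    + apply Rmult_le_reg_r with (/ (8 * C)); [apply Rinv_0_lt_compat; lra|].
      replace (8 * C * a * / (8 * C)) with a by (field; lra). lra.
    + apply Rmult_le_reg_r with (/ (16 * h * C)); [apply Rinv_0_lt_compat; nra|].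
      replace (16 * h * C * a * / (16 * h * C)) with a by (field; split; lra). lra.
Qed.

Lemma implicit_function_NB n A (F : nat -> ser) (Q Qi : nat -> nat -> C) L c :
  1 < A -> 0 <= L -> 0 <= c ->
  (forall k, (k < n)%nat -> NB (2 * n) A (F k) L) ->
  (forall k, (k < n)%nat -> F k [] = C0) ->
  (forall i j, (i < n)%nat -> (j < n)%nat -> Q i j = F i [(n + j)%nat]) ->
  (forall i j, (i < n)%nat -> (j < n)%nat -> Cmatmul n Q Qi i j = Cid i j /\ Cmatmul n Qi Q i j = Cid i j) ->
  (forall j k, (j < n)%nat -> (k < n)%nat -> Cmod (Qi j k) <= c) ->
  exists a0 Cst, 0 < a0 < A /\ 0 < Cst /\ forall a, 0 < a < a0 ->
    exists f : nat -> ser, (forall j, (j < n)%nat -> NB n a (f j) (Cst * a)) /\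
      forall (U : nat -> ser) a', 0 < a' < a -> (forall i, (i < n)%nat -> NB n A (U i) a') ->
        exists V : nat -> ser,
          (forall j, (j < n)%nat -> NB n A (V j) (Cst * a)) /\
          (forall k, (k < n)%nat -> eval_is (2 * n) (F k) (pair_tuple n U V) (fun _ => C0)) /\
          (forall j, (j < n)%nat -> eval_is n (f j) U (V j)) /\
          (forall V', (forall j, (j < n)%nat -> NB n A (V' j) (2 * Cst * a)) ->
             (forall k, (k < n)%nat -> eval_is (2 * n) (F k) (pair_tuple n U V') (fun _ => C0)) ->
             forall j w, (j < n)%nat -> V' j w = V j w).
Proof.
  intros HA HL0 Hc0 HF HF0 HQ Hinv Hc.
  set (h := A + INR n * (c * L) + 1).
  assert (HcL : 0 <= INR n * (c * L)) by (apply Rmult_le_pos; [apply pos_INR|apply Rmult_le_pos; auto]).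
  assert (Hh : 0 < h) by (unfold h; lra).
  assert (HH : forall j, (j < n)%nat -> NB (2 * n) A (Hser n F Qi j) h).
  { intros j Hj. eapply NB_weaken; [apply NB_Hser; auto; lra|unfold h; lra]. }
  set (C := 2 * h / A + 1).
  assert (HC : 1 <= C) by (unfold C; assert (0 <= 2 * h / A) by (apply Rmult_le_pos; [lra|left; apply Rinv_0_lt_compat; lra]); lra).
  destruct (small_radius A h C) as [a0 [Ha0 Hsmall]]; auto.
  exists a0, C. split; [auto|split; [lra|]]. intros a Ha.
  destruct (Hsmall a Ha) as [E1 E2].
  destruct (contraction_conditions A h C a) as [Hs [Hlip Hself]]; auto; try lra.
  destruct (implicit_fixed_point n A h a (2 * C * a) (C * a) (Hser n F Qi)) as [f [Hf Hsol]];
    auto; try lra; try nra.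
  { intros; apply Hser_nil; auto. }
  { intros; apply (Hser_lin n F Q Qi); auto. }
  exists f. split; auto. intros U a' Ha' HU.
  destruct (Hsol U a' Ha' HU) as [V [HVb [HVfix [HVf Huniq]]]].
  exists V. split; [|split; [|split]]; auto.
  - apply (H_to_F n F Q Qi Hinv U V (fun k => evalf (2 * n) (F k) (pair_tuple n U V))); auto.
    intros k Hk. refine (proj1 (evalf_spec (2 * n) n (F k) _ A A L (2 * C * a) _ _ _ _ _)); auto; try nra.
    apply NB_pair_tuple; intros; eapply NB_weaken; [apply HU; auto|nra|apply HVb; auto|nra].
  - intros j Hj. apply eval_is_iff, HVf; auto.
  - intros V' HV' HFV' j w Hj. apply Huniq; auto. intros i Hi. apply (F_to_H n F Qi); auto.
Qed.

Lemma norm_lt_NB m r P b : 0 <= r -> in_space m r P -> norm_lt m r P b -> exists l, l < b /\ NB m r P l.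
Proof. intros Hr [Hs _] [l [Hl Hlt]]. exists l. split; auto. apply has_norm_NB; auto. Qed.

Lemma NB_norm_lt m r P B b : 0 <= r -> NB m r P B -> B < b -> in_space m r P /\ norm_lt m r P b.
Proof.
  intros Hr HB Hb. destruct (NB_has_norm m r P B Hr HB) as [l [Hl Hle]].
  split; [split; [apply HB|exists l; auto]|]. exists l. split; auto. lra.
Qed.

Lemma finite_bound (Pr : nat -> R -> Prop) n : (forall i x y, Pr i x -> x <= y -> Pr i y) ->
  (forall i, (i < n)%nat -> exists x, 0 <= x /\ Pr i x) -> exists y, 0 <= y /\ forall i, (i < n)%nat -> Pr i y.
Proof.
  intros Hm. induction n as [|n IH]; intros H; [exists 0; split; [lra|intros; lia]|].
  destruct IH as [y [Hy Hy']]; [intros; apply H; lia|].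
  destruct (H n ltac:(lia)) as [x [Hx Hx']]. exists (y + x). split; [lra|].
  intros i Hi. destruct (Nat.eq_dec i n); [subst; apply (Hm _ x); auto; lra|].
  apply (Hm _ y); [apply Hy'; lia|lra].
Qed.

Lemma finite_lt (Pr : nat -> R -> Prop) n a : (forall i x y, Pr i x -> x <= y -> Pr i y) ->
  (forall i, (i < n)%nat -> exists x, x < a /\ Pr i x) -> exists y, y < a /\ forall i, (i < n)%nat -> Pr i y.
Proof.
  intros Hm. induction n as [|n IH]; intros H; [exists (a - 1); split; [lra|intros; lia]|].
  destruct IH as [y [Hy Hy']]; [intros; apply H; lia|].
  destruct (H n ltac:(lia)) as [x [Hx Hx']]. exists (Rmax y x). split; [apply Rmax_lub_lt; auto|].
  intros i Hi. destruct (Nat.eq_dec i n); [subst; apply (Hm _ x); auto; apply Rmax_r|].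
  apply (Hm _ y); [apply Hy'; lia|apply Rmax_l].
Qed.

Lemma uniform_bounds n A (F : nat -> ser) (Qi : nat -> nat -> C) : 1 < A ->
  (forall k, (k < n)%nat -> in_space (2 * n) A (F k)) ->
  exists L c, 0 <= L /\ 0 <= c /\ (forall k, (k < n)%nat -> NB (2 * n) A (F k) L) /\
    (forall j k, (j < n)%nat -> (k < n)%nat -> Cmod (Qi j k) <= c).
Proof.
  intros HA Hsp.
  destruct (finite_bound (fun k y => NB (2 * n) A (F k) y) n) as [L [HL0 HL]].
  { intros; eapply NB_weaken; eauto. }
  { intros k Hk. destruct (Hsp k Hk) as [Hs [l Hl]]. exists l.
    assert (NB (2 * n) A (F k) l) by (apply has_norm_NB; auto; lra). split; auto. eapply NB_nonneg; eauto; lra. }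
  set (c := rs (fun j => rs (fun k => Cmod (Qi j k)) (seq 0 n)) (seq 0 n)).
  exists L, c. split; [auto|split; [apply rs_nonneg; intros; apply rs_nonneg; intros; apply Cmod_ge0|]].
  split; auto. intros j k Hj Hk.
  assert (Hjk : Cmod (Qi j k) <= rs (fun k => Cmod (Qi j k)) (seq 0 n)).
  { apply (rs_member_le (fun k => Cmod (Qi j k))); [apply in_seq; lia|intros; apply Cmod_ge0]. }
  assert (Hrow : rs (fun k => Cmod (Qi j k)) (seq 0 n) <= c).
  { apply (rs_member_le (fun j => rs (fun k => Cmod (Qi j k)) (seq 0 n))); [apply in_seq; lia|].
    intros; apply rs_nonneg; intros; apply Cmod_ge0. }
  lra.
Qed.

Lemma common_radius n A (U : nat -> ser) a : 0 < A -> 0 < a ->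
  (forall i, (i < n)%nat -> in_space n A (U i) /\ norm_lt n A (U i) a) ->
  exists a', 0 < a' < a /\ forall i, (i < n)%nat -> NB n A (U i) a'.
Proof.
  intros HA Ha HU.
  destruct (finite_lt (fun i y => NB n A (U i) y) n a) as [b [Hb HbU]].
  { intros; eapply NB_weaken; eauto. }
  { intros i Hi. destruct (HU i Hi) as [HUs HUn]. apply norm_lt_NB; auto; lra. }
  exists (Rmax b (a / 2)). split; [split; [eapply Rlt_le_trans; [|apply Rmax_r]; lra|apply Rmax_lub_lt; lra]|].
  intros i Hi. eapply NB_weaken; [apply HbU; auto|apply Rmax_l].
Qed.

Theorem mainTheorem1 (n : nat) (A : R) (F : nat -> ser) :
  1 < A ->
  (forall i, (i < n)%nat -> in_space (2 * n) A (F i)) ->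
  (* F(0,...,0,0,...,0) = 0 : constant coefficients vanish *)
  (forall i, (i < n)%nat -> F i nil = C0) ->
  (exists Q, jac0_is n F Q /\ Cinvertible n Q) ->
  exists a0 Cst : R, 0 < a0 < A /\
    forall a, 0 < a < a0 ->
      exists f : nat -> ser,
        (forall i, (i < n)%nat -> in_space n a (f i)) /\
        forall U : nat -> ser,
          (forall i, (i < n)%nat -> in_space n A (U i) /\ norm_lt n A (U i) a) ->
          exists V : nat -> ser,
            (forall i, (i < n)%nat -> in_space n A (V i) /\ norm_lt n A (V i) (Cst * a)) /\
            (forall i, (i < n)%nat -> eval_is (2 * n) (F i) (pair_tuple n U V) (fun _ => C0)) /\
            (forall i, (i < n)%nat -> eval_is n (f i) U (V i)) /\
            (forall V' : nat -> ser,
               (forall i, (i < n)%nat -> in_space n A (V' i) /\ norm_lt n A (V' i) (Cst * a)) ->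
               (forall i, (i < n)%nat -> eval_is (2 * n) (F i) (pair_tuple n U V') (fun _ => C0)) ->
               forall i w, (i < n)%nat -> V' i w = V i w).
Proof.
  intros HA Hsp HF0 [Q [Hjac [Qi Hinv]]].
  destruct (uniform_bounds n A F Qi) as [L [c [HL0 [Hc0 [HL Hc]]]]]; auto.
  destruct (implicit_function_NB n A F Q Qi L c) as [a0 [Cst [Ha0 [HCst Hsol]]]]; auto.
  { apply jac_coef; auto. }
  exists a0, (2 * Cst). split; auto. intros a Ha.
  destruct (Hsol a Ha) as [f [Hf Hsub]]. exists f. split.
  { intros i Hi. apply (NB_norm_lt n a _ (Cst * a) (Cst * a + 1)); auto; lra. }
  intros U HU.
  destruct (common_radius n A U a) as [a' [Ha' HUa']]; auto; try lra.
  destruct (Hsub U a' Ha' HUa') as [V [HVb [HVF [HVf Huniq]]]].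
  exists V. split; [|split; [|split]]; auto.
  - intros i Hi. apply (NB_norm_lt n A _ (Cst * a)); auto; nra.
  - intros V' HV' HFV'. apply Huniq; auto. intros j Hj.
    destruct (HV' j Hj) as [HV's HV'n]. destruct (norm_lt_NB n A _ _ ltac:(lra) HV's HV'n) as [l [Hl HVl]].
    eapply NB_weaken; [exact HVl|lra].
Qed.
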